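(* Let $G$ be an infinite locally finite graph, $D$ a finite connected graph, and $G'=G\square D$, where $G$ is identified with one of its copies $G\times\{x_0\}$ ($x_0\in V(D)$) in $G'$. Let $\alpha$ be an end of $G$ and $\alpha'$ the end of $G'$ with $\alpha\subseteq\alpha'$. Then $d(\alpha')=d(\alpha)\,|V(D)|$.
   Context: $\square$ denotes the Cartesian product. A ray is a one-way infinite path; two rays of a graph $H$ are equivalent in $H$ if for every finite $S\subseteq V(H)$ some component of $H-S$ contains tails of both; the classes are the ends of $H$. The degree $d(\alpha)$ of an end is the maximum number of pairwise vertex-disjoint rays in $\alpha$. *)

From Stdlib Require List.
From mathcomp Require Import all_boot.
Set Implicit Arguments. Unset Strict Implicit. Unset Printing Implicit Defensive.

Section Graphs.
Variables (V : Type) (adj : V -> V -> Prop).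

Definition simple_graph : Prop :=
  (forall u v, adj u v -> adj v u) /\ (forall v, ~ adj v v).

Definition locally_finite : Prop :=
  forall v, exists l : list V, forall w, adj v w -> List.In w l.

Definition infinite_graph : Prop :=
  ~ exists l : list V, forall v, List.In v l.

Definition is_ray (r : nat -> V) : Prop :=
  (forall n m, r n = r m -> n = m) /\ (forall n, adj (r n) (r n.+1)).

Inductive conn_avoid (S : list V) : V -> V -> Prop :=
| ca_refl v : ~ List.In v S -> conn_avoid S v v
| ca_step u v w : ~ List.In u S -> adj u v -> conn_avoid S v w -> conn_avoid S u w.

Definition ray_equiv (r1 r2 : nat -> V) : Prop :=
  forall S : list V, exists k, forall n m, k <= n -> k <= m ->
    conn_avoid S (r1 n) (r2 m).

Definition is_end (alpha : (nat -> V) -> Prop) : Prop :=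
  exists r0, is_ray r0 /\
    forall r, alpha r <-> (is_ray r /\ ray_equiv r0 r).

Definition k_disjoint_rays (alpha : (nat -> V) -> Prop) (k : nat) : Prop :=
  exists f : nat -> nat -> V,
    (forall i, i < k -> alpha (f i)) /\
    (forall i j, i < k -> j < k -> i <> j -> forall n m, f i n <> f j m).

(* degree of an end, in nat ∪ {∞}: Some k = k, None = ∞ (maximum = supremum) *)
Definition end_degree (alpha : (nat -> V) -> Prop) (d : option nat) : Prop :=
  match d with
  | Some k => k_disjoint_rays alpha k /\ ~ k_disjoint_rays alpha k.+1
  | None => forall k, k_disjoint_rays alpha k
  end.

End Graphs.

Definition cart_adj (V : Type) (adj : V -> V -> Prop) (T : Type) (e : rel T)
  (p q : V * T) : Prop :=
  (p.1 = q.1 /\ e p.2 q.2) \/ (adj p.1 q.1 /\ p.2 = q.2).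

Definition odeg_mul (d : option nat) (n : nat) : option nat :=
  match d with Some k => Some (k * n) | None => None end.

(* Lower bound: k disjoint rays of alpha, copied into every G x {t}, give
   k |V(D)| disjoint rays, which lie in alpha' because D is connected.
   Upper bound: if alpha has no k + 1 disjoint rays, then any finite F is
   separated from alpha by a set Y of at most k vertices. Otherwise, with X_0 a minimal
   separator of F and X_(i+1) a minimal separator of X_i, its neighbours and the
   ball of radius i + 1 around alpha's base ray, all X_i have more than k
   vertices; Menger's theorem links each X_i to X_(i+1) by |X_i| disjoint paths,
   and these concatenate into k + 1 disjoint rays of alpha. Now take for F the
   projections of the first vertices of k |V(D)| + 1 disjoint rays of alpha':
   each of these rays meets Y x V(D), a set of at most k |V(D)| vertices. *)

From Stdlib Require Import List ListDec Arith Lia Classical ClassicalEpsilon.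
Import ListNotations.

Definition decide (P : Prop) : {P} + {~ P} := excluded_middle_informative P.

Definition eq_dec {V : Type} (x y : V) : {x = y} + {x <> y} := decide (x = y).

Lemma ex_minimal_nat (P : nat -> Prop) :
  (exists n, P n) -> exists n, P n /\ forall m, P m -> n <= m.
Proof.
  intros H.
  destruct (dec_inh_nat_subset_has_unique_least_element P (fun n => classic (P n)) H)
    as [n [[Pn Hmin] _]].
  eauto.
Qed.

Section Walks.
Context {V : Type}.
Implicit Types (R : V -> V -> Prop) (A B Y Z w : list V).

Inductive walk R : list V -> Prop :=
| walk_one v : walk R [v]
| walk_cons u v l : R u v -> walk R (v :: l) -> walk R (u :: v :: l).

Definition avoids w Y := forall v, In v w -> ~ In v Y.

Definition AB_walk R A B w :=
  walk R w /\ (exists a t, w = a :: t /\ In a A) /\ (exists h b, w = h ++ [b] /\ In b B).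

Lemma walk_mono R R' w : (forall u v, R u v -> R' u v) -> walk R w -> walk R' w.
Proof. intros H W; induction W; constructor; auto. Qed.

Lemma walk_app R p z q : walk R (p ++ [z]) -> walk R (z :: q) -> walk R (p ++ z :: q).
Proof.
  induction p as [|a p IH]; simpl; intros H1 H2; auto.
  destruct p as [|b p]; simpl in *; inversion H1; subst; constructor; auto.
Qed.

Lemma walk_prefix R p z q : walk R (p ++ z :: q) -> walk R (p ++ [z]).
Proof.
  induction p as [|a p IH]; simpl; intros H; [constructor|].
  destruct p as [|b p]; simpl in *; inversion H; subst; constructor; auto; constructor.
Qed.

Lemma walk_suffix R p z q : walk R (p ++ z :: q) -> walk R (z :: q).
Proof.
  induction p as [|a p IH]; simpl; intros H; auto.
  apply IH. destruct p; simpl in *; inversion H; subst; auto.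
Qed.

Lemma walk_tail R a l : walk R (a :: l) -> l <> [] -> walk R l.
Proof. intros W N. inversion W; subst; auto. congruence. Qed.

Lemma walk_init R l b : walk R (l ++ [b]) -> l <> [] -> walk R l.
Proof.
  intros W N. destruct (exists_last N) as [l' [c ->]].
  apply walk_prefix with [b]. rewrite <- app_assoc in W. exact W.
Qed.

Lemma walk_nth R l d n : walk R l -> S n < length l -> R (nth n l d) (nth (S n) l d).
Proof.
  intros W. revert n. induction W as [v|u v l Ruv W IH]; intros n L; simpl in L; [lia|].
  destruct n as [|n]; [exact Ruv|]. apply IH. simpl. lia.
Qed.

Lemma split_first_in Z w : (exists v, In v w /\ In v Z) ->
  exists p z q, w = p ++ z :: q /\ In z Z /\ avoids p Z.
Proof.
  induction w as [|a w IH]; intros [v [Hv HZ]]; [destruct Hv|].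
  destruct (decide (In a Z)) as [Ha|Ha].
  - exists [], a, w. split; auto. split; auto. intros x [].
  - destruct Hv as [<-|Hv]; [contradiction|].
    destruct IH as [p [z [q [E [Hz Hp]]]]]; eauto.
    exists (a :: p), z, q. subst. split; auto. split; auto.
    intros x [<-|Hx]; auto.
Qed.

Lemma split_last_in Z w : (exists v, In v w /\ In v Z) ->
  exists p z q, w = p ++ z :: q /\ In z Z /\ avoids q Z.
Proof.
  induction w as [|a w IH]; intros [v [Hv HZ]]; [destruct Hv|].
  destruct (decide (exists v, In v w /\ In v Z)) as [Hw|Hw].
  - destruct (IH Hw) as [p [z [q [E [Hz Hq]]]]].
    exists (a :: p), z, q. subst. auto.
  - exists [], a, w. destruct Hv as [<-|Hv].
    + split; auto. split; auto. intros x Hx HxZ. apply Hw; eauto.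
    + exfalso; apply Hw; eauto.
Qed.

Lemma split_first_step_outside R R' w : walk R w -> ~ walk R' w ->
  exists p u v q, w = p ++ u :: v :: q /\ walk R' (p ++ [u]) /\ R u v /\ ~ R' u v.
Proof.
  induction 1 as [v|u v l Ruv W IH]; intros N.
  - exfalso; apply N; constructor.
  - destruct (decide (R' u v)) as [H|H].
    + assert (N' : ~ walk R' (v :: l)) by (intro; apply N; constructor; auto).
      destruct (IH N') as [p [u' [v' [q [E [W' [H1 H2]]]]]]].
      exists (u :: p), u', v', q. rewrite E. split; [reflexivity|]. split; auto.
      destruct p as [|b p]; simpl in *; inversion E; subst; constructor; auto; constructor.
    + exists [], u, v, l. simpl. split; auto. split; auto. constructor.
Qed.

Lemma split_last_step_outside R R' w : walk R w -> ~ walk R' w ->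
  exists p u v q, w = p ++ u :: v :: q /\ walk R' (v :: q) /\ R u v /\ ~ R' u v.
Proof.
  induction 1 as [v|u v l Ruv W IH]; intros N.
  - exfalso; apply N; constructor.
  - destruct (decide (walk R' (v :: l))) as [H|H].
    + exists [], u, v, l. simpl. split; auto. split; auto. split; auto.
      intro; apply N; constructor; auto.
    + destruct (IH H) as [p [u' [v' [q [E [W' [H1 H2]]]]]]].
      exists (u :: p), u', v', q. rewrite E. auto.
Qed.

Lemma avoids_incl w w' Y : incl w' w -> avoids w Y -> avoids w' Y.
Proof. intros I A v Hv; apply A, I, Hv. Qed.

Lemma avoids_app w w' Y : avoids w Y -> avoids w' Y -> avoids (w ++ w') Y.
Proof. intros A1 A2 v Hv. apply in_app_or in Hv as [|]; auto. Qed.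

Lemma AB_walk_nonnil R A B w : AB_walk R A B w -> w <> [].
Proof. intros [W _] ->. inversion W. Qed.

Lemma AB_walk_mono R R' A B w :
  (forall u v, R u v -> R' u v) -> AB_walk R A B w -> AB_walk R' A B w.
Proof. intros H [W X]. split; auto. eapply walk_mono; eauto. Qed.

Lemma AB_walk_of_walk R R' A B w : AB_walk R A B w -> walk R' w -> AB_walk R' A B w.
Proof. intros [_ X] W; split; auto. Qed.

Lemma AB_walk_join R A Z Z' B h z t :
  AB_walk R A Z (h ++ [z]) -> AB_walk R Z' B (z :: t) -> AB_walk R A B (h ++ z :: t).
Proof.
  intros [W1 [[a [t1 [E1 Ha]]] _]] [W2 [_ [h2 [b [E2 Hb]]]]].
  split; [apply walk_app; auto|split].
  - destruct h as [|c h]; simpl in *; inversion E1; subst; eauto.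
  - exists (h ++ h2), b. rewrite E2, app_assoc. auto.
Qed.

Lemma AB_walk_prefix R A B B' p z q :
  AB_walk R A B (p ++ z :: q) -> In z B' -> AB_walk R A B' (p ++ [z]).
Proof.
  intros [W [[a [t [E Ha]]] _]] Hz. split; [eapply walk_prefix; eauto|split; eauto].
  destruct p as [|c p]; simpl in *; inversion E; subst; eauto.
Qed.

Lemma AB_walk_suffix R A A' B p z q :
  AB_walk R A B (p ++ z :: q) -> In z A' -> AB_walk R A' B (z :: q).
Proof.
  intros [W [_ [h [b [E Hb]]]]] Hz. split; [eapply walk_suffix; eauto|split; eauto].
  destruct (exists_last (l := z :: q)) as [h' [b' E']]; [discriminate|].
  rewrite E', app_assoc in E. apply app_inj_tail in E as [_ <-]. eauto.
Qed.

End Walks.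

Lemma choice_on {X Y : Type} (y0 : Y) (D : X -> Prop) (P : X -> Y -> Prop) :
  (forall x, D x -> exists y, P x y) -> exists f : X -> Y, forall x, D x -> P x (f x).
Proof.
  intros H. apply (choice (fun x y => D x -> P x y)). intros x.
  destruct (decide (D x)) as [Dx|Dx].
  - destruct (H x Dx) as [y Hy]. eauto.
  - exists y0. contradiction.
Qed.

Section Linkages.
Context {V : Type}.
Implicit Types (R : V -> V -> Prop) (A B Y Z w : list V) (F : list (list V)).

Definition linkage R A B F :=
  NoDup F /\ (forall w1 w2, In w1 F -> In w2 F -> w1 <> w2 -> avoids w1 w2) /\
  forall w, In w F -> AB_walk R A B w.

Definition unseparated R k A B :=
  forall Y, length Y < k -> exists w, AB_walk R A B w /\ avoids w Y.

Lemma linkage_map R R' A B A' B' F (f : list V -> list V) :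
  linkage R A B F ->
  (forall w, In w F -> AB_walk R' A' B' (f w)) ->
  (forall w1 w2, In w1 F -> In w2 F -> w1 <> w2 -> avoids (f w1) (f w2)) ->
  linkage R' A' B' (map f F).
Proof.
  intros [ND _] HAB HD. split; [|split].
  - apply NoDup_map_NoDup_ForallPairs; auto. intros a b Ha Hb E.
    destruct (decide (a = b)) as [|N]; auto. exfalso.
    destruct (f a) as [|v t] eqn:Ea; [exact (AB_walk_nonnil _ _ _ _ (HAB a Ha) Ea)|].
    apply (HD a b Ha Hb N v); [rewrite Ea|rewrite <- E]; simpl; auto.
  - intros g1 g2 H1 H2 N. apply in_map_iff in H1 as [w1 [<- H1]].
    apply in_map_iff in H2 as [w2 [<- H2]].
    apply HD; auto. intros ->; auto.
  - intros g Hg. apply in_map_iff in Hg as [w [<- Hw]]. auto.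
Qed.

Lemma linkage_map_incl R R' A B A' B' F (f : list V -> list V) :
  linkage R A B F -> (forall w, In w F -> AB_walk R' A' B' (f w) /\ incl (f w) w) ->
  linkage R' A' B' (map f F).
Proof.
  intros HF Hf. apply linkage_map with R A B; [auto|apply Hf|].
  intros w1 w2 H1 H2 N v Hv1 Hv2. destruct HF as [_ [D _]].
  apply (D w1 w2 H1 H2 N v); apply Hf; auto.
Qed.

Lemma linkage_mono R R' A B F :
  (forall u v, R u v -> R' u v) -> linkage R A B F -> linkage R' A B F.
Proof.
  intros HR [ND [D H]]. split; [|split]; auto.
  intros w Hw. eapply AB_walk_mono; eauto.
Qed.

Lemma linkage_heads_cover R A B F : linkage R A B F -> NoDup A -> length A <= length F ->
  forall a, In a A -> exists t, In (a :: t) F.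
Proof.
  intros [ND [D H]] NA L a Ha.
  assert (Hh : forall w, In w F -> In (hd a w) A /\ In (hd a w) w).
  { intros w Hw. destruct (H w Hw) as [_ [[a' [t [E Ha']]] _]]. subst; simpl; auto. }
  assert (NDh : NoDup (map (hd a) F)).
  { apply NoDup_map_NoDup_ForallPairs; auto. intros w1 w2 H1 H2 E.
    destruct (decide (w1 = w2)) as [|N]; auto. exfalso.
    apply (D w1 w2 H1 H2 N (hd a w1)); [apply Hh; auto| rewrite E; apply Hh; auto]. }
  assert (I : incl A (map (hd a) F)).
  { apply NoDup_length_incl; auto. rewrite length_map; auto.
    intros v Hv. apply in_map_iff in Hv as [w [<- Hw]]. apply Hh; auto. }
  apply I in Ha. apply in_map_iff in Ha as [w [E Hw]].
  destruct (H w Hw) as [_ [[a' [t [E' _]]] _]]. subst w. simpl in E. subst a'. eauto.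
Qed.

Lemma linkage_trim_end R A B F : linkage R A B F ->
  exists F', length F' = length F /\ linkage R A B F' /\
    forall w, In w F' -> exists p b, w = p ++ [b] /\ avoids p B.
Proof.
  intros HF.
  destruct (choice_on [] (fun w => In w F) (fun w w' => exists p z q,
     w = p ++ z :: q /\ w' = p ++ [z] /\ In z B /\ avoids p B)) as [f Hf].
  { intros w Hw. destruct HF as [_ [_ HAB]].
    destruct (HAB w Hw) as [_ [_ [h [b [E Hb]]]]].
    destruct (split_first_in B w) as [p [z [q [E' [Hz Ap]]]]].
    { exists b. split; auto. rewrite E. apply in_or_app; simpl; auto. }
    exists (p ++ [z]), p, z, q. auto. }
  exists (map f F). split; [apply length_map|]. split.
  - apply linkage_map_incl with R A B; auto. intros w Hw.
    destruct (Hf w Hw) as [p [z [q [E [-> [Hz _]]]]]]. split.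
    + apply AB_walk_prefix with B q; auto. rewrite <- E. apply HF; auto.
    + rewrite E. intros v Hv. apply in_app_or in Hv as [|[<-|[]]]; apply in_or_app; simpl; auto.
  - intros w' Hw'. apply in_map_iff in Hw' as [w [<- Hw]].
    destruct (Hf w Hw) as [p [z [q [_ [-> [_ Ap]]]]]]. eauto.
Qed.

Lemma linkage_trim_start R A B F : linkage R A B F ->
  exists F', length F' = length F /\ linkage R A B F' /\
    forall w, In w F' -> exists a q, w = a :: q /\ avoids q A.
Proof.
  intros HF.
  destruct (choice_on [] (fun w => In w F) (fun w w' => exists p z q,
     w = p ++ z :: q /\ w' = z :: q /\ In z A /\ avoids q A)) as [f Hf].
  { intros w Hw. destruct HF as [_ [_ HAB]].
    destruct (HAB w Hw) as [_ [[a [t [E Ha]]] _]].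
    destruct (split_last_in A w) as [p [z [q [E' [Hz Aq]]]]].
    { exists a. split; auto. rewrite E. simpl; auto. }
    exists (z :: q), p, z, q. auto. }
  exists (map f F). split; [apply length_map|]. split.
  - apply linkage_map_incl with R A B; auto. intros w Hw.
    destruct (Hf w Hw) as [p [z [q [E [-> [Hz _]]]]]]. split.
    + apply AB_walk_suffix with A p; auto. rewrite <- E. apply HF; auto.
    + rewrite E. intros v Hv. apply in_or_app; auto.
  - intros w' Hw'. apply in_map_iff in Hw' as [w [<- Hw]].
    destruct (Hf w Hw) as [p [z [q [_ [-> [_ Aq]]]]]]. eauto.
Qed.

(* Each walk of [F1] is continued by the walk of [F2] that starts at its end. *)
Lemma linkage_glue R A Z B F1 F2 :
  linkage R A Z F1 -> linkage R Z B F2 -> NoDup Z -> length Z <= length F2 ->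
  (forall w Q, In w F1 -> In Q F2 -> avoids w (tl Q)) ->
  exists F, length F = length F1 /\ linkage R A B F.
Proof.
  intros HF1 HF2 NZ LZ Hcross.
  destruct (choice_on [] (fun w => In w F1) (fun w g => exists p z q,
     w = p ++ [z] /\ In (z :: q) F2 /\ g = p ++ z :: q)) as [g Hg].
  { intros w Hw. destruct HF1 as [_ [_ HAB]].
    destruct (HAB w Hw) as [_ [_ [p [z [E Hz]]]]].
    destruct (linkage_heads_cover _ _ _ _ HF2 NZ LZ z Hz) as [q Hq].
    exists (p ++ z :: q), p, z, q. auto. }
  exists (map g F1). split; [apply length_map|].
  pose proof HF1 as [_ [D1 AB1]]. pose proof HF2 as [_ [D2 AB2]].
  apply linkage_map with R A Z; auto.
  - intros w Hw. destruct (Hg w Hw) as [p [z [q [E [Hq ->]]]]].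
    apply AB_walk_join with Z Z; [rewrite <- E|]; auto.
  - intros w1 w2 H1 H2 N v Hv1 Hv2.
    destruct (Hg w1 H1) as [p1 [z1 [q1 [E1 [Hq1 G1]]]]].
    destruct (Hg w2 H2) as [p2 [z2 [q2 [E2 [Hq2 G2]]]]].
    assert (Iw1 : incl p1 w1) by (rewrite E1; intros a Ha; apply in_or_app; auto).
    assert (Iw2 : incl p2 w2) by (rewrite E2; intros a Ha; apply in_or_app; auto).
    assert (Z12 : z1 <> z2).
    { intros <-. apply (D1 w1 w2 H1 H2 N z1); [rewrite E1|rewrite E2];
        apply in_or_app; simpl; auto. }
    rewrite G1 in Hv1. rewrite G2 in Hv2.
    apply in_app_or in Hv1 as [Hv1|Hv1]; apply in_app_or in Hv2 as [Hv2|Hv2].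
    + apply (D1 w1 w2 H1 H2 N v); auto.
    + destruct Hv2 as [<-|Hv2].
      * apply (D1 w1 w2 H1 H2 N z2); auto. rewrite E2. apply in_or_app; simpl; auto.
      * apply (Hcross w1 (z2 :: q2) H1 Hq2 v); auto.
    + destruct Hv1 as [<-|Hv1].
      * apply (D1 w2 w1 H2 H1 (not_eq_sym N) z1); auto. rewrite E1. apply in_or_app; simpl; auto.
      * apply (Hcross w2 (z1 :: q1) H2 Hq1 v); auto.
    + apply (D2 (z1 :: q1) (z2 :: q2) Hq1 Hq2) with v; auto. congruence.
Qed.

End Linkages.

(* Induction step of Menger's theorem on the number of edges: [R] is [R'] plus
   the edge [xy], [S] is an A-B separator of size below [k] for [R'], and [A]
   reaches [x] in [R' - S]. Then [x :: S] and [y :: S] are A-B separators of [R],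
   and k disjoint [R']-walks from [A] to [x :: S] and from [y :: S] to [B]
   glue along [S] and the edge [xy]. *)
Section Menger_step.
Context {V : Type}.
Implicit Types (Y Z w : list V).
Variables (R R' : V -> V -> Prop) (x y : V).
Hypothesis R_split : forall u v, R u v <-> R' u v \/ (u = x /\ v = y) \/ (u = y /\ v = x).
Hypothesis x_neq_y : x <> y.
Hypothesis menger_R' :
  forall k A B, unseparated R' k A B -> exists F, length F = k /\ linkage R' A B F.
Variables (k : nat) (A B S : list V).
Hypothesis unsep_R : unseparated R k A B.
Hypothesis S_separates : ~ exists w, AB_walk R' A B w /\ avoids w S.
Hypothesis S_small : length S < k.
Hypothesis S_nodup : NoDup S.
Hypothesis A_reaches_x : exists w, AB_walk R' A [x] w /\ avoids w S.

Lemma R'_sub_R u v : R' u v -> R u v.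
Proof. intro; apply R_split; auto. Qed.

Lemma missing_edge u v : R u v -> ~ R' u v -> (u = x /\ v = y) \/ (u = y /\ v = x).
Proof. intros H N. apply R_split in H as [H|H]; [contradiction|auto]. Qed.

Lemma no_walk_through z w1 w2 : AB_walk R' A [z] w1 -> avoids w1 S ->
  AB_walk R' [z] B w2 -> avoids w2 S -> False.
Proof.
  intros H1 A1 H2 A2.
  pose proof H1 as [_ [_ [h [b [E1 [<-|[]]]]]]].
  pose proof H2 as [_ [[a [t [E2 [<-|[]]]]] _]]. subst w1 w2.
  apply S_separates. exists (h ++ z :: t). split; [apply AB_walk_join with [z] [z]; auto|].
  intros v Hv. apply in_app_or in Hv as [Hv|Hv]; [apply A1, in_or_app|apply A2]; auto.
Qed.

Lemma y_reaches_B : exists t, AB_walk R' [y] B (y :: t) /\ avoids (y :: t) S.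
Proof.
  destruct (unsep_R S S_small) as [W [HW AW]].
  assert (NW : ~ walk R' W) by (intro Hw; apply S_separates; exists W; split; auto;
    apply AB_walk_of_walk with R; auto).
  destruct (split_last_step_outside _ _ _ (proj1 HW) NW)
    as [p [u [v [q [E [W' [Ruv NR]]]]]]].
  assert (HV : AB_walk R' [v] B (v :: q)).
  { apply AB_walk_of_walk with R; auto. apply AB_walk_suffix with A (p ++ [u]).
    - rewrite <- app_assoc. simpl. rewrite <- E. auto.
    - simpl; auto. }
  assert (AV : avoids (v :: q) S).
  { apply avoids_incl with W; auto. rewrite E. intros a Ha. apply in_or_app. simpl. auto. }
  destruct (missing_edge _ _ Ruv NR) as [[-> ->]|[-> ->]]; eauto.
  destruct A_reaches_x as [w [Hw Aw]]. exfalso. apply (no_walk_through x w (x :: q)); auto.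
Qed.

Lemma A_misses_y : ~ exists w, AB_walk R' A [y] w /\ avoids w S.
Proof.
  intros [w [Hw Aw]]. destruct y_reaches_B as [t [Ht At]].
  apply (no_walk_through y w (y :: t)); auto.
Qed.

Lemma x_misses_B : ~ exists w, AB_walk R' [x] B w /\ avoids w S.
Proof.
  intros [w [Hw Aw]]. destruct A_reaches_x as [w' [Hw' Aw']].
  apply (no_walk_through x w' w); auto.
Qed.

Lemma x_notin_S : ~ In x S.
Proof.
  destruct A_reaches_x as [w [[_ [_ [h [b [E [<-|[]]]]]]] Aw]].
  apply Aw. rewrite E. apply in_or_app; simpl; auto.
Qed.

Lemma y_notin_S : ~ In y S.
Proof. destruct y_reaches_B as [t [_ At]]. apply At; simpl; auto. Qed.

Lemma AB_walk_meets_x_y w : AB_walk R A B w -> avoids w S -> In x w /\ In y w.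
Proof.
  intros Hw Aw.
  assert (NW : ~ walk R' w) by (intro W; apply S_separates; exists w; split; auto;
    apply AB_walk_of_walk with R; auto).
  destruct (split_first_step_outside _ _ _ (proj1 Hw) NW)
    as [p [u [v [q [E [W' [Ruv NR]]]]]]].
  assert (In u w /\ In v w) as [Hu Hv] by (rewrite E; split; apply in_or_app; simpl; auto).
  destruct (missing_edge _ _ Ruv NR) as [[-> ->]|[-> ->]]; auto.
Qed.

Lemma AB_walk_meets_zS z w : z = x \/ z = y -> AB_walk R A B w ->
  exists v, In v w /\ In v (z :: S).
Proof.
  intros Hz Hw. destruct (decide (exists v, In v w /\ In v S)) as [[v [H H']]|N].
  - exists v; simpl; auto.
  - assert (Aw : avoids w S) by (intros v Hv HvS; apply N; eauto).
    exists z. split; [|simpl; auto].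
    destruct (AB_walk_meets_x_y w Hw Aw); destruct Hz; subst; auto.
Qed.

Lemma k_eq_length_S : k = length S + 1.
Proof.
  assert (N : ~ length (x :: S) < k).
  { intro L. destruct (unsep_R _ L) as [w [Hw Aw]].
    assert (AwS : avoids w S) by (intros v Hv HvS; apply (Aw v Hv); simpl; auto).
    apply (Aw x); [apply (AB_walk_meets_x_y w Hw AwS)|simpl; auto]. }
  simpl in N. lia.
Qed.

Lemma unseparated_A_xS : unseparated R' k A (x :: S).
Proof.
  intros T L. destruct (unsep_R T L) as [W [HW AW]].
  destruct (split_first_in (x :: S) W (AB_walk_meets_zS x W (or_introl eq_refl) HW))
    as [p [z [q [E [Hz Ap]]]]].
  assert (HP : AB_walk R A (x :: S) (p ++ [z])).
  { apply AB_walk_prefix with B q; [rewrite <- E|]; auto. }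
  assert (AP : avoids (p ++ [z]) T).
  { apply avoids_incl with W; auto. rewrite E. intros a Ha.
    apply in_app_or in Ha as [|[<-|[]]]; apply in_or_app; simpl; auto. }
  destruct (decide (walk R' (p ++ [z]))) as [Wp|Wp].
  - exists (p ++ [z]); split; auto. apply AB_walk_of_walk with R; auto.
  - exfalso. destruct (split_first_step_outside _ _ _ (proj1 HP) Wp)
      as [p2 [u [v [q2 [E2 [W2 [Ruv NR]]]]]]].
    assert (I : incl (p2 ++ [u]) p).
    { destruct (exists_last (l := v :: q2)) as [q' [z' E3]]; [discriminate|].
      rewrite E3, app_comm_cons, app_assoc in E2. apply app_inj_tail in E2 as [E2 _].
      rewrite E2. intros a Ha.
      apply in_app_or in Ha as [|[<-|[]]]; apply in_or_app; simpl; auto. }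
    assert (Hu : In u p) by (apply I; apply in_or_app; simpl; auto).
    assert (u <> x) by (intros ->; apply (Ap x Hu); simpl; auto).
    assert (u = y) by (destruct (missing_edge _ _ Ruv NR) as [[? ?]|[? ?]]; auto; contradiction).
    subst u. apply A_misses_y. exists (p2 ++ [y]). split.
    + apply AB_walk_of_walk with R; auto.
      apply AB_walk_prefix with (x :: S) (v :: q2); [rewrite <- E2|]; simpl; auto.
    + intros a Ha HaS. apply (Ap a (I a Ha)). simpl; auto.
Qed.

Lemma unseparated_yS_B : unseparated R' k (y :: S) B.
Proof.
  intros T L. destruct (unsep_R T L) as [W [HW AW]].
  destruct (split_last_in (y :: S) W (AB_walk_meets_zS y W (or_intror eq_refl) HW))
    as [p [z [q [E [Hz Aq]]]]].
  assert (HQ : AB_walk R (y :: S) B (z :: q)).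
  { apply AB_walk_suffix with A p; [rewrite <- E|]; auto. }
  assert (AQ : avoids (z :: q) T).
  { apply avoids_incl with W; auto. rewrite E. intros a Ha. apply in_or_app; simpl; auto. }
  destruct (decide (walk R' (z :: q))) as [Wq|Wq].
  - exists (z :: q); split; auto. apply AB_walk_of_walk with R; auto.
  - exfalso. destruct (split_last_step_outside _ _ _ (proj1 HQ) Wq)
      as [p2 [u [v [q2 [E2 [W2 [Ruv NR]]]]]]].
    assert (I : incl (v :: q2) q).
    { destruct p2 as [|a p2]; simpl in E2; inversion E2; subst.
      - intros c Hc; simpl; auto.
      - intros c Hc. apply in_or_app. right. simpl. auto. }
    assert (Hv : In v q) by (apply I; simpl; auto).
    assert (v <> y) by (intros ->; apply (Aq y Hv); simpl; auto).
    assert (v = x) by (destruct (missing_edge _ _ Ruv NR) as [[? ?]|[? ?]]; auto; contradiction).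
    subst v. apply x_misses_B. exists (x :: q2). split.
    + apply AB_walk_of_walk with R; auto. apply AB_walk_suffix with (y :: S) (p2 ++ [u]).
      * rewrite <- app_assoc. simpl. rewrite <- E2. auto.
      * simpl; auto.
    + intros a Ha HaS. apply (Aq a (I a Ha)). simpl; auto.
Qed.

Lemma x_notin_yS_walk z q :
  AB_walk R' (y :: S) B (z :: q) -> avoids q (y :: S) -> ~ In x (z :: q).
Proof.
  intros HQ Aq [E|Hx].
  - subst z. destruct HQ as [_ [[a [t [E Ha]]] _]]. inversion E; subst a.
    destruct Ha as [E'|Ha]; [apply x_neq_y; auto|apply x_notin_S; auto].
  - destruct (in_split _ _ Hx) as [qa [qb Eq]]. apply x_misses_B. exists (x :: qb). split.
    + apply AB_walk_suffix with (y :: S) (z :: qa); [|simpl; auto].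
      simpl. rewrite <- Eq. auto.
    + intros a Ha HaS. apply (Aq a); [rewrite Eq; apply in_or_app; auto|simpl; auto].
Qed.

Lemma xS_walk_avoids_yS_walk p z z' q :
  AB_walk R' A (x :: S) (p ++ [z]) -> avoids p (x :: S) ->
  AB_walk R' (y :: S) B (z' :: q) -> avoids q (y :: S) -> avoids (p ++ [z]) q.
Proof.
  intros Hw Ap HQ Aq v Hv Hq.
  destruct (in_split _ _ Hq) as [qa [qb Eq]].
  assert (HV : AB_walk R' [v] B (v :: qb)).
  { apply AB_walk_suffix with (y :: S) (z' :: qa); [|simpl; auto]. simpl.
    rewrite <- Eq. auto. }
  assert (AV : avoids (v :: qb) S).
  { intros a Ha HaS. apply (Aq a); [rewrite Eq; apply in_or_app; simpl; auto|simpl; auto]. }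
  apply in_app_or in Hv as [Hv|[<-|[]]].
  - destruct (in_split _ _ Hv) as [pa [pb Ep]].
    apply S_separates. exists (pa ++ v :: qb). split.
    + apply AB_walk_join with [v] [v]; auto.
      apply AB_walk_prefix with (x :: S) (pb ++ [z]); simpl; auto.
      rewrite app_comm_cons, app_assoc, <- Ep. auto.
    + apply avoids_app; auto. intros a Ha HaS.
      apply (Ap a); [rewrite Ep; apply in_or_app; auto|simpl; auto].
  - destruct (proj2 (proj2 Hw)) as [h [b [E Hb]]]. apply app_inj_tail in E as [_ <-].
    destruct Hb as [<-|Hb]; [apply x_misses_B; eauto|apply (Aq z Hq); simpl; auto].
Qed.

Lemma xS_walk_misses_y p z :
  AB_walk R' A (x :: S) (p ++ [z]) -> avoids p (x :: S) -> ~ In y (p ++ [z]).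
Proof.
  intros Hw Ap Hy. apply in_app_or in Hy as [Hy|[Ez|[]]].
  - destruct (in_split _ _ Hy) as [pa [pb Ep]]. apply A_misses_y. exists (pa ++ [y]). split.
    + apply AB_walk_prefix with (x :: S) (pb ++ [z]); simpl; auto.
      rewrite app_comm_cons, app_assoc, <- Ep. auto.
    + intros a Ha HaS. apply (Ap a); [|simpl; auto]. rewrite Ep.
      apply in_app_or in Ha as [|[<-|[]]]; apply in_or_app; simpl; auto.
  - destruct (proj2 (proj2 Hw)) as [h [b [E Hb]]]. apply app_inj_tail in E as [_ <-].
    rewrite Ez in Hb. destruct Hb as [E|E]; [apply x_neq_y; auto|apply y_notin_S; auto].
Qed.

Lemma menger_step : exists F, length F = k /\ linkage R A B F.
Proof.
  destruct (menger_R' k A (x :: S) unseparated_A_xS) as [F1 [L1 HF1]].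
  destruct (linkage_trim_end _ _ _ _ HF1) as [F1' [L1' [HF1' T1]]].
  destruct (menger_R' k (y :: S) B unseparated_yS_B) as [F2 [L2 HF2]].
  destruct (linkage_trim_start _ _ _ _ HF2) as [F2' [L2' [HF2' T2]]].
  set (ext := fun Q => if eq_dec (hd x Q) y then x :: Q else Q).
  assert (x_notin : forall Q, In Q F2' -> ~ In x Q).
  { intros Q HQ. destruct (T2 Q HQ) as [z [q [-> Aq]]].
    apply x_notin_yS_walk; auto. apply HF2'; auto. }
  assert (HF2'' : linkage R (x :: S) B (map ext F2')).
  { pose proof HF2' as [_ [D2 AB2]]. apply linkage_map with R' (y :: S) B; auto.
    - intros Q HQ. destruct (AB2 Q HQ) as [WQ [[z [q [EQ Hz]]] Hl]]. subst Q. unfold ext. simpl.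
      destruct (eq_dec z y) as [->|N].
      + split; [constructor; [apply R_split; auto|apply walk_mono with R'; auto]|].
        { apply R'_sub_R. }
        split; [exists x, (y :: q); simpl; auto|].
        destruct Hl as [h [b [E Hb]]]. exists (x :: h), b. rewrite E. auto.
      + split; [apply walk_mono with R'; auto; apply R'_sub_R|]. split; auto.
        exists z, q. destruct Hz as [|Hz]; [congruence|simpl; auto].
    - intros Q1 Q2 H1 H2 N v. unfold ext.
      destruct (eq_dec (hd x Q1) y) as [E1|N1], (eq_dec (hd x Q2) y) as [E2|N2];
        intros Hv1 Hv2; simpl in Hv1, Hv2.
      + destruct (T2 Q1 H1) as [z1 [q1 [-> _]]]. destruct (T2 Q2 H2) as [z2 [q2 [-> _]]].
        simpl in E1, E2. subst z1 z2. apply (D2 _ _ H1 H2 N y); simpl; auto.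
      + destruct Hv1 as [<-|Hv1]; [apply (x_notin Q2 H2 Hv2)|apply (D2 _ _ H1 H2 N v); auto].
      + destruct Hv2 as [<-|Hv2]; [apply (x_notin Q1 H1 Hv1)|apply (D2 _ _ H1 H2 N v); auto].
      + apply (D2 _ _ H1 H2 N v); auto. }
  destruct (linkage_glue R A (x :: S) B F1' (map ext F2')) as [F [L HF]]; auto.
  - apply linkage_mono with R'; auto. apply R'_sub_R.
  - constructor; auto. apply x_notin_S.
  - rewrite length_map, L2', L2, k_eq_length_S. simpl. lia.
  - intros w Q' Hw HQ'. apply in_map_iff in HQ' as [Q [<- HQ]].
    destruct (T1 w Hw) as [p [z [-> Ap]]]. destruct (T2 Q HQ) as [z' [q [-> Aq]]].
    assert (Hw' : AB_walk R' A (x :: S) (p ++ [z])) by (apply HF1'; auto).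
    assert (HQ' : AB_walk R' (y :: S) B (z' :: q)) by (apply HF2'; auto).
    assert (Cq := xS_walk_avoids_yS_walk p z z' q Hw' Ap HQ' Aq).
    unfold ext. simpl. destruct (eq_dec z' y) as [->|_]; simpl; auto.
    intros v Hv [<-|Hq]; [apply (xS_walk_misses_y p z Hw' Ap Hv)|apply (Cq v Hv Hq)].
  - exists F. split; [congruence|auto].
Qed.

End Menger_step.

Lemma menger_add_edge {V : Type} (R R' : V -> V -> Prop) (x y : V) :
  (forall u v, R u v <-> R' u v \/ (u = x /\ v = y) \/ (u = y /\ v = x)) -> x <> y ->
  (forall k A B, unseparated R' k A B -> exists F, length F = k /\ linkage R' A B F) ->
  forall k A B, unseparated R k A B -> exists F, length F = k /\ linkage R A B F.
Proof.
  intros R_split x_neq_y menger_R' k A B unsep_R.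
  destruct (decide (unseparated R' k A B)) as [Hy|Hn].
  { destruct (menger_R' k A B Hy) as [F [L HF]]. exists F; split; auto.
    apply linkage_mono with R'; auto. intros u v; rewrite R_split; auto. }
  apply not_all_ex_not in Hn as [Y0 HY0]. apply imply_to_and in HY0 as [LY0 NY0].
  set (S := nodup eq_dec Y0).
  assert (LS : length S < k).
  { enough (length S <= length Y0) by lia. apply NoDup_incl_length; [apply NoDup_nodup|].
    intros a; unfold S; rewrite nodup_In; auto. }
  assert (NS : ~ exists w, AB_walk R' A B w /\ avoids w S).
  { intros [w [Hw Aw]]. apply NY0. exists w. split; auto.
    intros v Hv HY. apply (Aw v Hv). apply nodup_In; auto. }
  destruct (unsep_R S LS) as [W [HW AW]].
  assert (NW : ~ walk R' W) by (intro Ww; apply NS; exists W; split; auto;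
    apply AB_walk_of_walk with R; auto).
  destruct (split_first_step_outside _ _ _ (proj1 HW) NW) as [p [u [v [q [EW [W' [Ruv NR]]]]]]].
  assert (HA : AB_walk R' A [u] (p ++ [u]) /\ avoids (p ++ [u]) S).
  { split.
    - apply AB_walk_of_walk with R; auto.
      apply AB_walk_prefix with B (v :: q); [rewrite <- EW|]; simpl; auto.
    - apply avoids_incl with W; auto. rewrite EW. intros c Hc.
      apply in_app_or in Hc as [|[<-|[]]]; apply in_or_app; simpl; auto. }
  apply R_split in Ruv as [Ruv|[[-> ->]|[-> ->]]]; [contradiction| |].
  - apply (menger_step R R' x y R_split x_neq_y menger_R' k A B S); auto.
    + apply NoDup_nodup.
    + eauto.
  - apply (menger_step R R' y x) with S; auto.
    + intros a b. rewrite R_split. tauto.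
    + apply NoDup_nodup.
    + eauto.
Qed.

Section Menger.
Context {V : Type}.
Implicit Types (A B Y Z w : list V) (E : list (V * V)).

Definition edge_rel E (u v : V) : Prop := In (u, v) E \/ In (v, u) E.

Lemma menger_no_edges k A B : unseparated (edge_rel []) k A B ->
  exists F, length F = k /\ linkage (edge_rel []) A B F.
Proof.
  intros H.
  set (C := nodup eq_dec (filter (fun a => if decide (In a B) then true else false) A)).
  assert (HC : forall a, In a C <-> In a A /\ In a B).
  { intros a. unfold C. rewrite nodup_In, filter_In.
    destruct (decide (In a B)); intuition; discriminate. }
  assert (L : k <= length C).
  { destruct (le_lt_dec k (length C)) as [|L]; auto. exfalso.
    destruct (H C L) as [w [[W [[a [t [E Ha]]] [h [b [E' Hb]]]]] Aw]].
    subst w. destruct t as [|c t]; [|inversion W as [|u v l [[]|[]]]].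
    destruct h as [|? [|]]; inversion E'; subst.
    apply (Aw _ (or_introl eq_refl)), HC; auto. }
  exists (map (fun v => [v]) (firstn k C)). split.
  - rewrite length_map. apply firstn_length_le; auto.
  - assert (ND : NoDup (firstn k C)).
    { apply NoDup_app_remove_r with (skipn k C). rewrite firstn_skipn. apply NoDup_nodup. }
    split; [|split].
    + apply NoDup_map_NoDup_ForallPairs; auto. intros a b _ _ E; inversion E; auto.
    + intros w1 w2 H1 H2 N v Hv1 Hv2.
      apply in_map_iff in H1 as [a [<- _]]. apply in_map_iff in H2 as [b [<- _]].
      destruct Hv1 as [<-|[]]; destruct Hv2 as [<-|[]]. auto.
    + intros w Hw. apply in_map_iff in Hw as [a [<- Ha]].
      assert (Hc : In a C) by (rewrite <- (firstn_skipn k C); apply in_or_app; auto).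
      apply HC in Hc as [HA HB]. split; [constructor|split].
      * exists a, []; auto.
      * exists [], a; auto.
Qed.

Definition remove_edge E (x y : V) :=
  filter (fun p => if decide (p = (x, y) \/ p = (y, x)) then false else true) E.

Lemma edge_rel_remove_edge E x y u v : In (x, y) E ->
  edge_rel E u v <-> edge_rel (remove_edge E x y) u v \/ (u = x /\ v = y) \/ (u = y /\ v = x).
Proof.
  intros Hxy.
  assert (list_In_mem : forall p, In p (remove_edge E x y) <-> In p E /\ ~ (p = (x, y) \/ p = (y, x))).
  { intros p. unfold remove_edge. rewrite filter_In. destruct (decide _); intuition; discriminate. }
  unfold edge_rel. rewrite !list_In_mem. split.
  - intros Huv. destruct (decide ((u = x /\ v = y) \/ (u = y /\ v = x))) as [|N]; auto.
    left. destruct Huv; [left|right]; split; auto; intros [Q|Q]; inversion Q; subst; tauto.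
  - intros [[[? _]|[? _]]|[[-> ->]|[-> ->]]]; auto.
Qed.

Theorem menger_edges n : forall E, length E <= n -> (forall p, In p E -> fst p <> snd p) ->
  forall k A B, unseparated (edge_rel E) k A B ->
  exists F, length F = k /\ linkage (edge_rel E) A B F.
Proof.
  induction n as [|n IHn]; intros E LE HE.
  { destruct E; [apply menger_no_edges|simpl in LE; lia]. }
  destruct E as [|[x y] E0]; [apply menger_no_edges|].
  assert (Hxy : In (x, y) ((x, y) :: E0)) by (simpl; auto).
  apply (menger_add_edge _ (edge_rel (remove_edge ((x, y) :: E0) x y)) x y).
  - intros u v. apply edge_rel_remove_edge; auto.
  - apply (HE (x, y) Hxy).
  - apply IHn.
    + unfold remove_edge. simpl. destruct (decide _) as [_|N]; [|exfalso; apply N; auto].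
      pose proof (filter_length_le
        (fun p => if decide (p = (x, y) \/ p = (y, x)) then false else true) E0).
      simpl in LE. lia.
    + intros p Hp. apply HE. unfold remove_edge in Hp. apply filter_In in Hp. tauto.
Qed.

Fixpoint edges w : list (V * V) :=
  match w with
  | u :: ((v :: _) as t) => (u, v) :: edges t
  | _ => []
  end.

Definition vertices E : list V := flat_map (fun p => [fst p; snd p]) E.

Fixpoint sublists (l : list V) : list (list V) :=
  match l with [] => [[]] | a :: l' => sublists l' ++ map (cons a) (sublists l') end.

Lemma filter_in_sublists (f : V -> bool) l : In (filter f l) (sublists l).
Proof.
  induction l as [|a l IH]; simpl; auto.
  apply in_or_app. destruct (f a); [right; apply in_map; auto|left; auto].
Qed.

Lemma walk_edges (R : V -> V -> Prop) w : walk R w ->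
  walk (edge_rel (edges w)) w /\ forall p, In p (edges w) -> R (fst p) (snd p).
Proof.
  induction 1 as [v|u v l Ruv W [IH1 IH2]]; simpl.
  - split; [constructor|intros _ []].
  - split.
    + constructor; [left; simpl; auto|]. eapply walk_mono; [|exact IH1].
      intros a b [H|H]; [left|right]; simpl; auto.
    + intros p [<-|Hp]; auto.
Qed.

Lemma walk_in_vertices E a t : walk (edge_rel E) (a :: t) -> incl t (vertices E).
Proof.
  revert a. induction t as [|b t IH]; intros a W v Hv; [destruct Hv|].
  inversion W as [|u w l Hab W']; subst. destruct Hv as [<-|Hv]; [|eapply IH; eauto].
  unfold vertices. apply in_flat_map. destruct Hab as [Hab|Hab]; eexists; split; eauto; simpl; auto.
Qed.

Variable adj : V -> V -> Prop.

Section Finite_reduction.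
Variables (A B : list V) (E0 : list (V * V)).
Hypothesis E0_adj : forall p, In p E0 -> adj (fst p) (snd p).
Variable pick : list V -> list V.
Hypothesis pick_spec : forall Z, (walk adj (pick Z) \/ pick Z = []) /\
  ((exists w, AB_walk adj A B w /\ avoids w Z) -> AB_walk adj A B (pick Z) /\ avoids (pick Z) Z).

Let universe := nodup eq_dec (A ++ vertices E0).

Definition extended_edges := E0 ++ flat_map (fun Z => edges (pick Z)) (sublists universe).

Definition trace Y := filter (fun u => if decide (In u Y) then true else false) universe.

Lemma extended_edges_adj p : In p extended_edges -> adj (fst p) (snd p).
Proof.
  intros Hp. apply in_app_or in Hp as [Hp|Hp]; auto.
  apply in_flat_map in Hp as [Z [_ Hp]]. destruct (pick_spec Z) as [[W|W] _].
  - apply (walk_edges _ _ W); auto.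
  - rewrite W in Hp. destruct Hp.
Qed.

Lemma in_trace Y v : In v (trace Y) <-> In v universe /\ In v Y.
Proof. unfold trace. rewrite filter_In. destruct (decide (In v Y)); intuition; discriminate. Qed.

Lemma length_trace Y y : In y Y -> ~ In y universe -> length (trace Y) < length Y.
Proof.
  intros Hy NU.
  assert (L : length (trace Y) <= length (remove eq_dec y Y)).
  { apply NoDup_incl_length; [apply NoDup_filter, NoDup_nodup|].
    intros u Hu. apply in_trace in Hu as [Hu1 Hu2]. apply in_in_remove; auto.
    intros ->; contradiction. }
  pose proof (remove_length_lt eq_dec Y y Hy). lia.
Qed.

Lemma AB_walk_E0_in_universe w : AB_walk (edge_rel E0) A B w -> incl w universe.
Proof.
  intros [W [[a [t [-> Ha]]] _]] v Hv. apply nodup_In.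
  destruct Hv as [<-|Hv]; apply in_or_app; auto. right. eapply walk_in_vertices; eauto.
Qed.

(* A set [Y] leaving the universe has fewer than [k] vertices inside it; a set
   inside the universe is avoided by [pick (trace Y)]. *)
Lemma unseparated_extended_edges k : unseparated (edge_rel E0) k A B ->
  unseparated adj (S k) A B -> unseparated (edge_rel extended_edges) (S k) A B.
Proof.
  intros H0 H Y L.
  destruct (decide (exists y, In y Y /\ ~ In y universe)) as [[y [Hy NU]]|Nex].
  - destruct (H0 (trace Y)) as [w [Hw Aw]]; [pose proof (length_trace Y y Hy NU); lia|].
    exists w. split.
    + apply AB_walk_mono with (edge_rel E0); auto.
      intros u v [Q|Q]; [left|right]; apply in_or_app; auto.
    + intros v Hv HvY. apply (Aw v Hv), in_trace. split; auto.
      apply (AB_walk_E0_in_universe w Hw); auto.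
  - assert (Htrace : forall v, In v Y -> In v (trace Y)).
    { intros v Hv. apply in_trace. split; auto. apply NNPP. intros NV. apply Nex; eauto. }
    destruct (pick_spec (trace Y)) as [_ [HZ1 HZ2]].
    { apply H. enough (length (trace Y) <= length Y) by lia.
      apply NoDup_incl_length; [apply NoDup_filter, NoDup_nodup|].
      intros u Hu. apply in_trace in Hu as [_ Hu]. auto. }
    exists (pick (trace Y)). split.
    + destruct HZ1 as [W X]. split; auto.
      destruct (walk_edges _ _ W) as [W' _]. eapply walk_mono; [|exact W'].
      intros u v [Q|Q]; [left|right]; apply in_or_app; right;
        apply in_flat_map; exists (trace Y); split; auto; apply filter_in_sublists.
    + intros v Hv HvY. apply (HZ2 v Hv), Htrace; auto.
Qed.

End Finite_reduction.

Lemma unseparated_finite_edges k A B : unseparated adj k A B ->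
  exists E, (forall p, In p E -> adj (fst p) (snd p)) /\ unseparated (edge_rel E) k A B.
Proof.
  revert A B. induction k as [|k IH]; intros A B H.
  { exists []. split; [intros _ []|intros Y L; lia]. }
  destruct (IH A B) as [E0 [HE0 H0]]; [intros Y L; apply H; lia|].
  destruct (choice (fun Z w => (walk adj w \/ w = []) /\
     ((exists w', AB_walk adj A B w' /\ avoids w' Z) -> AB_walk adj A B w /\ avoids w Z)))
    as [pick Hpick].
  { intros Z. destruct (decide (exists w', AB_walk adj A B w' /\ avoids w' Z)) as [[w' Hw']|N].
    - exists w'. split; auto. left; apply Hw'.
    - exists []. split; auto. intro; contradiction. }
  exists (extended_edges A E0 pick). split.
  - apply (extended_edges_adj A B E0); auto.
  - apply (unseparated_extended_edges A B E0); auto.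
Qed.

Hypothesis adj_sym : forall u v, adj u v -> adj v u.
Hypothesis adj_irrefl : forall v, ~ adj v v.

Theorem menger k A B : unseparated adj k A B -> exists F, length F = k /\ linkage adj A B F.
Proof.
  intros H. destruct (unseparated_finite_edges k A B H) as [E [HE H']].
  destruct (menger_edges (length E) E (le_n _)) with k A B as [F [L HF]]; auto.
  - intros p Hp Eq. apply (adj_irrefl (fst p)). rewrite Eq at 2. apply HE; auto.
  - exists F. split; auto. apply linkage_mono with (edge_rel E); auto.
    intros u v [Q|Q]; [apply (HE _ Q)|apply adj_sym, (HE _ Q)].
Qed.

End Menger.

(* [ray_equiv] and [k_disjoint_rays] with Peano's [le] and [lt], for [lia]. *)
Definition ray_equiv' {V : Type} (R : V -> V -> Prop) (r1 r2 : nat -> V) :=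
  forall S : list V, exists k, forall n m, k <= n -> k <= m -> conn_avoid R S (r1 n) (r2 m).

Definition k_disjoint_rays' {V : Type} (alpha : (nat -> V) -> Prop) (k : nat) :=
  exists f : nat -> nat -> V, (forall i, i < k -> alpha (f i)) /\
    (forall i j, i < k -> j < k -> i <> j -> forall n m, f i n <> f j m).

Section Connectivity.
Context {V : Type}.
Implicit Types (A B X Y : list V).
Variable R : V -> V -> Prop.
Hypothesis R_sym : forall u v, R u v -> R v u.

Lemma conn_avoid_notin S u v : conn_avoid R S u v -> ~ In u S /\ ~ In v S.
Proof. induction 1; intuition. Qed.

Lemma conn_avoid_trans S u v w :
  conn_avoid R S u v -> conn_avoid R S v w -> conn_avoid R S u w.
Proof. induction 1; intros; auto. econstructor; eauto. Qed.

Lemma conn_avoid_sym S u v : conn_avoid R S u v -> conn_avoid R S v u.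
Proof.
  induction 1 as [v Hv|u v w Hu Huv H IH]; [constructor; auto|].
  apply conn_avoid_trans with v; auto. econstructor; eauto.
  - apply (conn_avoid_notin _ _ _ H).
  - constructor; auto.
Qed.

Lemma conn_avoid_change X S u w : conn_avoid R X u w ->
  (forall v, conn_avoid R X v w -> ~ In v S) -> conn_avoid R S u w.
Proof.
  induction 1 as [v Hv|u v w Hu Huv H IH]; intros HS.
  - constructor. apply HS. constructor; auto.
  - econstructor; eauto. apply HS. econstructor; eauto.
Qed.

Lemma conn_avoid_first_in Y X u t : conn_avoid R Y u t -> conn_avoid R X u t \/
  exists x, In x X /\ conn_avoid R Y u x /\ conn_avoid R Y x t.
Proof.
  induction 1 as [v Hv|u v w Hu Huv H IH].
  - destruct (decide (In v X)) as [Hx|Hx].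
    + right; exists v; split; auto; split; constructor; auto.
    + left; constructor; auto.
  - destruct IH as [IH|[x [Hx [H1 H2]]]].
    + destruct (decide (In u X)) as [Hx|Hx].
      * right. exists u. split; auto. split; [constructor; auto|econstructor; eauto].
      * left. econstructor; eauto.
    + right. exists x. split; auto. split; auto. econstructor; eauto.
Qed.

Lemma conn_avoid_walk S u v : conn_avoid R S u v ->
  exists h t, walk R (u :: t) /\ u :: t = h ++ [v] /\ avoids (u :: t) S.
Proof.
  induction 1 as [v Hv|u v w Hu Huv H [h [t [W [E A]]]]].
  - exists [], []. split; [constructor|split; auto]. intros a [<-|[]]; auto.
  - exists (u :: h), (v :: t). split; [constructor; auto|]. split.
    + rewrite E; auto.
    + intros a [<-|Ha]; auto.
Qed.

Lemma ray_eventually_avoids (r : nat -> V) Y : (forall n m, r n = r m -> n = m) ->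
  exists M, forall j, M <= j -> ~ In (r j) Y.
Proof.
  intros Hinj. induction Y as [|a Y [M HM]].
  - exists 0. intros _ _ [].
  - destruct (decide (exists j, r j = a)) as [[j Hj]|N].
    + exists (max M (S j)). intros i Hi [E|E].
      * rewrite <- Hj in E. apply Hinj in E. lia.
      * apply (HM i); auto; lia.
    + exists M. intros i Hi [E|E]; [apply N; eauto|apply (HM i); auto].
Qed.

Lemma ray_tail_conn (r : nat -> V) Y M : (forall n, R (r n) (r (S n))) ->
  (forall j, M <= j -> ~ In (r j) Y) ->
  forall n m, M <= n -> M <= m -> conn_avoid R Y (r n) (r m).
Proof.
  intros Hr HS.
  assert (G : forall d n, M <= n -> conn_avoid R Y (r n) (r (n + d))).
  { induction d as [|d IH]; intros n Hn.
    - rewrite Nat.add_0_r. constructor. apply HS; lia.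
    - econstructor; [apply HS; lia|apply Hr|].
      replace (n + S d) with (S n + d) by lia. apply IH. lia. }
  intros n m Hn Hm. destruct (le_lt_dec n m).
  - replace m with (n + (m - n)) by lia. apply G; auto.
  - apply conn_avoid_sym. replace n with (m + (n - m)) by lia. apply G; auto.
Qed.

Lemma ray_equiv'_refl r : is_ray R r -> ray_equiv' R r r.
Proof.
  intros [Hi Ha] Y. destruct (ray_eventually_avoids r Y Hi) as [M HM]. exists M.
  apply ray_tail_conn; auto.
Qed.

Lemma ray_equiv'_sym r1 r2 : ray_equiv' R r1 r2 -> ray_equiv' R r2 r1.
Proof.
  intros H Y. destruct (H Y) as [k K]. exists k. intros n m Hn Hm.
  apply conn_avoid_sym; auto.
Qed.

Lemma ray_equiv'_trans r1 r2 r3 :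
  ray_equiv' R r1 r2 -> ray_equiv' R r2 r3 -> ray_equiv' R r1 r3.
Proof.
  intros H1 H2 Y. destruct (H1 Y) as [k1 K1]. destruct (H2 Y) as [k2 K2].
  exists (max k1 k2). intros n m Hn Hm. apply conn_avoid_trans with (r2 (max k1 k2)).
  - apply K1; lia.
  - apply K2; lia.
Qed.

Lemma AB_walk_cut_loop A B l1 a l2 l3 :
  AB_walk R A B (l1 ++ a :: l2 ++ a :: l3) -> AB_walk R A B (l1 ++ a :: l3).
Proof.
  intros [W [[a0 [t0 [E0 Ha0]]] [h0 [b0 [E1 Hb0]]]]]. split; [|split].
  - apply walk_app.
    + apply walk_prefix with (l2 ++ a :: l3). auto.
    + apply walk_suffix with (l1 ++ a :: l2). rewrite <- app_assoc. auto.
  - destruct l1 as [|c l1]; simpl in *; inversion E0; subst; eauto.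
  - destruct (exists_last (l := a :: l3)) as [h' [b' E']]; [discriminate|].
    assert (E2 : l1 ++ a :: l2 ++ a :: l3 = (l1 ++ a :: l2) ++ a :: l3)
      by (rewrite <- app_assoc; reflexivity).
    rewrite E2, E', app_assoc in E1.
    apply app_inj_tail in E1 as [_ <-]. exists (l1 ++ h'). rewrite E', app_assoc. eauto.
Qed.

Lemma AB_walk_shortest A B w : AB_walk R A B w -> exists p, incl p w /\ NoDup p /\ walk R p /\
  (exists a t, p = a :: t /\ In a A /\ avoids t A) /\
  (exists h b, p = h ++ [b] /\ In b B /\ avoids h B).
Proof.
  intros Hw.
  destruct (ex_minimal_nat (fun n => exists p, length p = n /\ incl p w /\ AB_walk R A B p))
    as [n [[p [Lp [Ip Hp]]] Hmin]].
  { exists (length w), w. split; auto. split; auto. apply incl_refl. }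
  assert (Short : forall p', incl p' p -> AB_walk R A B p' -> length p <= length p').
  { intros p' I H. rewrite Lp. apply Hmin. exists p'. split; auto. split; auto.
    eapply incl_tran; eauto. }
  exists p. split; auto. split; [|split; [apply Hp|split]].
  - apply NNPP. intros N. apply not_NoDup in N as [a [l1 [l2 [l3 E]]]];
      [|intros x y; apply classic].
    rewrite E in Hp. pose proof (Short (l1 ++ a :: l3)) as L.
    rewrite E, !length_app in L. simpl in L. rewrite length_app in L. simpl in L.
    enough (length l1 + S (length l2 + S (length l3)) <= length l1 + S (length l3)) by lia.
    apply L; [|apply AB_walk_cut_loop with l2; auto].
    intros c Hc. apply in_app_or in Hc as [|[<-|Hc]]; apply in_or_app; simpl; auto.
    right. right. apply in_or_app; simpl; auto.
  - destruct Hp as [W [[a [t [E Ha]]] Hl]]. exists a, t. split; auto. split; auto.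
    intros v Hv HvA. destruct (in_split _ _ Hv) as [t1 [t2 Et]].
    assert (Hp' : AB_walk R A B (v :: t2)).
    { apply AB_walk_suffix with A (a :: t1); auto. simpl. rewrite <- Et, <- E.
      split; [auto|split; [exists a, t; auto|auto]]. }
    assert (I : incl (v :: t2) p).
    { rewrite E, Et. intros c Hc. right. apply in_or_app; simpl; auto. }
    pose proof (Short _ I Hp') as Lt.
    rewrite E, Et in Lt. simpl in Lt. rewrite length_app in Lt. simpl in Lt. lia.
  - destruct Hp as [W [Hh [h [b [E Hb]]]]]. exists h, b. split; auto. split; auto.
    intros v Hv HvB. destruct (in_split _ _ Hv) as [h1 [h2 Eh]].
    assert (Hp' : AB_walk R A B (h1 ++ [v])).
    { apply AB_walk_prefix with B (h2 ++ [b]); auto. rewrite app_comm_cons, app_assoc, <- Eh, <- E.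
      split; [auto|split; [exact Hh|eauto]]. }
    assert (I : incl (h1 ++ [v]) p).
    { rewrite E, Eh. intros c Hc. apply in_app_or in Hc as [|[<-|[]]]; apply in_or_app; left;
      apply in_or_app; simpl; auto. }
    pose proof (Short _ I Hp') as Lt. rewrite E, Eh in Lt. rewrite !length_app in Lt.
    simpl in Lt. rewrite ?length_app in Lt. simpl in Lt. lia.
Qed.

End Connectivity.

Section End_separators.
Context {V : Type}.
Implicit Types (F X Y Z W : list V).
Variable adj : V -> V -> Prop.
Hypothesis adj_sym : forall u v, adj u v -> adj v u.
Variable r0 : nat -> V.
Hypothesis r0_inj : forall n m, r0 n = r0 m -> n = m.
Hypothesis r0_adj : forall n, adj (r0 n) (r0 (S n)).

Definition reaches_end X v :=
  exists m, (forall j, m <= j -> ~ In (r0 j) X) /\ conn_avoid adj X v (r0 m).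

Definition separates X W := forall w, In w W -> ~ reaches_end X w.

Lemma reaches_end_far X v N : reaches_end X v ->
  exists m, N <= m /\ (forall j, m <= j -> ~ In (r0 j) X) /\ conn_avoid adj X v (r0 m).
Proof.
  intros [m [Hm H]]. exists (max m N). split; [lia|]. split; [intros j Hj; apply Hm; lia|].
  apply conn_avoid_trans with (r0 m); auto. apply ray_tail_conn with m; auto; lia.
Qed.

Lemma reaches_end_r0 X m : (forall j, m <= j -> ~ In (r0 j) X) -> reaches_end X (r0 m).
Proof. intros H. exists m. split; auto. constructor. apply H; auto. Qed.

Lemma reaches_end_notin X v : reaches_end X v -> ~ In v X.
Proof. intros [m [_ H]]. apply (conn_avoid_notin _ _ _ _ H). Qed.

Lemma reaches_end_back X u v : conn_avoid adj X u v -> reaches_end X v -> reaches_end X u.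
Proof. intros H [m [Hm H']]. exists m. split; auto. eapply conn_avoid_trans; eauto. Qed.

Lemma reaches_end_step X u v : ~ In u X -> adj u v -> reaches_end X v -> reaches_end X u.
Proof.
  intros Hu Huv Hv. apply reaches_end_back with v; auto. econstructor; eauto.
  constructor. apply reaches_end_notin; auto.
Qed.

Lemma reaches_end_conn X Y u v : reaches_end X u -> reaches_end X v ->
  (forall s, In s Y -> ~ reaches_end X s) -> conn_avoid adj Y u v.
Proof.
  intros Hu Hv HY.
  destruct (reaches_end_far X u 0 Hu) as [m1 [_ [Hm1 H1]]].
  destruct (reaches_end_far X v m1 Hv) as [m2 [L2 [_ H2]]].
  apply conn_avoid_change with X.
  - apply conn_avoid_trans with (r0 m1); auto.
    apply conn_avoid_trans with (r0 m2); [apply ray_tail_conn with m1; auto|].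
    apply conn_avoid_sym; auto.
  - intros z Hz HzY. apply (HY z HzY). apply reaches_end_back with v; auto.
Qed.

Lemma reaches_end_walk_prefix X l b : walk adj (l ++ [b]) -> avoids l X ->
  reaches_end X b -> forall v, In v l -> reaches_end X v.
Proof.
  induction l as [|a l IH]; intros W A Hb v Hv; [destruct Hv|].
  assert (IH' : forall v, In v l -> reaches_end X v).
  { apply IH; [apply walk_tail with a; [exact W|destruct l; discriminate]
      | intros u Hu; apply A; simpl; auto | exact Hb]. }
  destruct Hv as [<-|Hv]; auto.
  destruct l as [|c l]; simpl in W; inversion W; subst.
  - apply reaches_end_step with b; auto. apply A; simpl; auto.
  - apply reaches_end_step with c; auto; [apply A; simpl; auto|apply IH'; simpl; auto].
Qed.

Lemma not_reaches_end_walk X a l : walk adj (a :: l) -> avoids (a :: l) X ->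
  ~ reaches_end X a -> forall v, In v (a :: l) -> ~ reaches_end X v.
Proof.
  intros W A Ha v Hv Rv. destruct (in_split _ _ Hv) as [l1 [l2 E]].
  destruct l1 as [|c l1]; simpl in E; inversion E; subst; [contradiction|].
  apply Ha. apply (reaches_end_walk_prefix X (c :: l1) v); simpl; auto.
  - exact (walk_prefix _ (c :: l1) v l2 W).
  - intros u Hu. apply A. simpl in Hu |- *. destruct Hu; auto.
    right. apply in_or_app; auto.
Qed.

Lemma separates_nested (X' : list V) Z X v : separates X' Z -> incl X Z ->
  reaches_end X' v -> reaches_end X v.
Proof.
  intros HS I Hv.
  destruct (ray_eventually_avoids r0 X r0_inj) as [M HM].
  destruct (reaches_end_far X' v M Hv) as [m [Lm [Hm H]]].
  destruct (conn_avoid_first_in _ X' X v (r0 m) H) as [H'|[x [Hx [_ H2]]]].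
  - exists m. split; auto. intros j Hj; apply HM; lia.
  - exfalso. apply (HS x (I x Hx)). exists m. split; auto.
Qed.

Lemma ex_min_separator W : exists X, separates X W /\ NoDup X /\
  forall Y, separates Y W -> length X <= length Y.
Proof.
  destruct (ex_minimal_nat (fun n => exists X, separates X W /\ NoDup X /\ length X = n))
    as [n [[X [HX [ND L]]] Hmin]].
  { exists (length (nodup eq_dec W)), (nodup eq_dec W). split; [|split; auto; apply NoDup_nodup].
    intros w Hw Hs. apply (reaches_end_notin _ _ Hs). apply nodup_In; auto. }
  exists X. split; auto. split; auto. intros Y HY. rewrite L.
  transitivity (length (nodup eq_dec Y)).
  - apply Hmin. exists (nodup eq_dec Y). split; [|split; auto; apply NoDup_nodup].
    intros w Hw [m [Hm H]]. apply (HY w Hw). exists m. split.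
    + intros j Hj Hin. apply (Hm j Hj), nodup_In; auto.
    + apply conn_avoid_change with (nodup eq_dec Y); auto.
      intros v Hv. rewrite <- (nodup_In eq_dec). apply (conn_avoid_notin _ _ _ _ Hv).
  - apply NoDup_incl_length; [apply NoDup_nodup|]. intros a; rewrite nodup_In; auto.
Qed.

(* Otherwise [X] minus [x] would be a smaller separator. *)
Lemma min_separator_neighbour W X x : separates X W ->
  (forall Y, separates Y W -> length X <= length Y) ->
  In x X -> exists y, adj x y /\ reaches_end X y.
Proof.
  intros HS Hmin Hx. apply NNPP. intros N.
  set (Y := remove eq_dec x X).
  assert (InX : forall a, In a X -> a = x \/ In a Y).
  { intros a Ha. destruct (eq_dec a x); auto. right. apply in_in_remove; auto. }
  assert (HY : separates Y W).
  { intros w Hw Hs.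
    destruct (ray_eventually_avoids r0 X r0_inj) as [M HM].
    destruct (reaches_end_far Y w M Hs) as [m [Lm [Hm H]]].
    assert (Ht : ~ In (r0 m) X) by (apply HM; auto).
    assert (G : forall u t, conn_avoid adj Y u t -> ~ In t X ->
      conn_avoid adj X u t \/ exists z, adj x z /\ conn_avoid adj X z t).
    { intros u t C. induction C as [v Hv|u v t Hu Huv C IH]; intros Hn.
      - left. constructor. auto.
      - destruct (IH Hn) as [IH'|IH']; auto.
        destruct (eq_dec u x) as [->|Nu]; [right; eauto|].
        left. econstructor; eauto. intros Hu'. destruct (InX u Hu'); auto. }
    destruct (G w (r0 m) H Ht) as [G1|[z [Hz G2]]].
    - apply (HS w Hw). exists m. split; auto. intros j Hj; apply HM; lia.
    - apply N. exists z. split; auto. exists m. split; auto. intros j Hj; apply HM; lia. }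
  pose proof (Hmin Y HY). pose proof (remove_length_lt eq_dec X x Hx). unfold Y in *. lia.
Qed.

End End_separators.

Section Layers.
Context {V : Type}.
Implicit Types (F X Y W : list V).
Variable adj : V -> V -> Prop.
Hypothesis adj_sym : forall u v, adj u v -> adj v u.
Hypothesis adj_irrefl : forall v, ~ adj v v.
Variable nb : V -> list V.
Hypothesis nb_spec : forall v w, adj v w -> In w (nb v).
Variable r0 : nat -> V.
Hypothesis r0_inj : forall n m, r0 n = r0 m -> n = m.
Hypothesis r0_adj : forall n, adj (r0 n) (r0 (S n)).

Local Notation reaches_end := (reaches_end adj r0).
Local Notation separates := (separates adj r0).

Variable min_sep : list V -> list V.
Hypothesis min_sep_spec : forall W, separates (min_sep W) W /\ NoDup (min_sep W) /\
  forall Y, separates Y W -> length (min_sep W) <= length Y.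
Variable F : list V.

Fixpoint ball n : list V :=
  match n with 0 => [r0 0] | S n => ball n ++ flat_map nb (ball n) end.

(* The balls make every vertex eventually separated from the end by some layer. *)
Fixpoint layer i : list V :=
  min_sep (match i with 0 => F | S i' => layer i' ++ flat_map nb (layer i') ++ ball i end).

Definition layer_domain i : list V :=
  match i with 0 => F | S i' => layer i' ++ flat_map nb (layer i') ++ ball i end.

Lemma layer_spec i : separates (layer i) (layer_domain i) /\ NoDup (layer i) /\
  forall Y, separates Y (layer_domain i) -> length (layer i) <= length Y.
Proof. destruct i; apply min_sep_spec. Qed.

Lemma reaches_layer_S i v : reaches_end (layer (S i)) v -> reaches_end (layer i) v.
Proof.
  apply (separates_nested adj adj_sym r0 r0_inj r0_adj) with (layer_domain (S i));
    [apply layer_spec|].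
  intros a Ha. simpl. apply in_or_app; auto.
Qed.

Lemma reaches_layer_le i j v : i <= j -> reaches_end (layer j) v -> reaches_end (layer i) v.
Proof. induction 1; auto. intros H'. apply IHle, reaches_layer_S; auto. Qed.

Lemma layer_not_reaches_next i x : In x (layer i) -> ~ reaches_end (layer (S i)) x.
Proof. intros Hx. apply layer_spec. simpl. apply in_or_app; auto. Qed.

Lemma next_layer_reaches i x : In x (layer (S i)) -> reaches_end (layer i) x.
Proof.
  intros Hx. destruct (layer_spec (S i)) as [HS [_ Hmin]].
  destruct (min_separator_neighbour adj adj_sym r0 r0_inj r0_adj _ _ x HS Hmin Hx) as [y [Hxy Hy]].
  destruct (decide (In x (layer i))) as [Hxi|Hxi].
  - exfalso. apply (HS y); auto. simpl. apply in_or_app; right; apply in_or_app; left.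
    apply in_flat_map. eauto.
  - apply reaches_end_step with y; auto. apply reaches_layer_S; auto.
Qed.

Lemma r0_in_ball m : In (r0 m) (ball m).
Proof.
  induction m; simpl; auto. apply in_or_app; right. apply in_flat_map. eauto.
Qed.

Lemma conn_avoid_in_ball Y u t : conn_avoid adj Y u t ->
  forall i, In u (ball i) -> exists j, In t (ball j).
Proof.
  induction 1 as [w Hw|u w t Hu Huw H IH]; intros i Hi; eauto.
  apply (IH (S i)). simpl. apply in_or_app; right. apply in_flat_map. eauto.
Qed.

Lemma layer_eventually_separates v : exists n, ~ reaches_end (layer n) v.
Proof.
  destruct (decide (reaches_end (layer 0) v)) as [[m [_ H]]|H]; [|eauto].
  destruct (conn_avoid_in_ball _ _ _ (conn_avoid_sym _ adj_sym _ _ _ H) m (r0_in_ball m))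
    as [j Hj].
  exists (S j). apply layer_spec. simpl. apply in_or_app; right; apply in_or_app; right.
  simpl. apply in_or_app; auto.
Qed.

Lemma layer_eventually_separates_all Y : exists n, forall s, In s Y -> ~ reaches_end (layer n) s.
Proof.
  induction Y as [|a Y [n IH]]; [exists 0; intros _ []|].
  destruct (layer_eventually_separates a) as [na Ha]. exists (max n na). intros s [<-|Hs] Hc.
  - apply Ha. apply reaches_layer_le with (max n na); auto; lia.
  - apply (IH s Hs). apply reaches_layer_le with (max n na); auto; lia.
Qed.

(* A smaller set meeting all [layer i]-[layer (S i)] walks would separate [layer_domain i]. *)
Lemma layers_unseparated i : unseparated adj (length (layer i)) (layer i) (layer (S i)).
Proof.
  intros Y L. apply NNPP. intros N.
  assert (HY : separates Y (layer_domain i)).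
  { intros w0 Hw0 Hs.
    destruct (ray_eventually_avoids r0 (layer i ++ layer (S i)) r0_inj) as [M HM].
    destruct (reaches_end_far adj adj_sym r0 r0_adj Y w0 M Hs) as [m [Lm [Hm H]]].
    assert (Htail : forall X, incl X (layer i ++ layer (S i)) -> forall j, m <= j -> ~ In (r0 j) X)
      by (intros X I j Hj Hin; apply (HM j); [lia|apply I; auto]).
    destruct (conn_avoid_first_in adj _ (layer i) w0 (r0 m) H) as [H'|[x [Hx [_ H2]]]].
    - apply (proj1 (layer_spec i) w0 Hw0). exists m. split; auto.
      apply Htail. intros a Ha; apply in_or_app; auto.
    - destruct (conn_avoid_first_in adj _ (layer (S i)) x (r0 m) H2)
        as [H''|[x' [Hx' [H3 _]]]].
      + apply (layer_not_reaches_next i x Hx). exists m. split; auto.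
        apply Htail. intros a Ha; apply in_or_app; auto.
      + destruct (conn_avoid_walk adj Y x x' H3) as [h [t [Wt [E A]]]].
        apply N. exists (x :: t). split; auto. split; auto. split; eauto. }
  pose proof (proj2 (proj2 (layer_spec i)) Y HY). lia.
Qed.

Definition link_path i x p := NoDup p /\ walk adj p /\
  (exists t, p = x :: t /\ avoids t (layer i)) /\
  (exists h b, p = h ++ [b] /\ In b (layer (S i)) /\ avoids h (layer (S i))).

Lemma layer_linkage i : exists P : V -> list V,
  (forall x, In x (layer i) -> link_path i x (P x)) /\
  (forall x y, In x (layer i) -> In y (layer i) -> x <> y -> avoids (P x) (P y)).
Proof.
  destruct (menger adj adj_sym adj_irrefl _ _ _ (layers_unseparated i)) as [F0 [L HF]].
  destruct (choice_on [] (fun w => In w F0) (fun w p => incl p w /\ NoDup p /\ walk adj p /\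
     (exists a t, p = a :: t /\ In a (layer i) /\ avoids t (layer i)) /\
     (exists h b, p = h ++ [b] /\ In b (layer (S i)) /\ avoids h (layer (S i))))) as [sh Hsh].
  { intros w Hw. apply AB_walk_shortest. apply HF; auto. }
  assert (HF' : linkage adj (layer i) (layer (S i)) (map sh F0)).
  { apply linkage_map_incl with adj (layer i) (layer (S i)); auto. intros w Hw.
    destruct (Hsh w Hw) as [I [_ [Wp [[a [t [E [Ha _]]]] [h [b [E' [Hb _]]]]]]]].
    split; auto. split; auto. split; eauto. }
  destruct (choice_on [] (fun x => In x (layer i))
     (fun x p => exists w t, In w F0 /\ p = sh w /\ p = x :: t)) as [P HP].
  { intros x Hx.
    destruct (linkage_heads_cover _ _ _ _ HF' (proj1 (proj2 (layer_spec i)))) with x as [t Ht];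
      [rewrite length_map; lia|auto|].
    apply in_map_iff in Ht as [w [Ew Hw]]. exists (x :: t), w, t. auto. }
  exists P. split.
  - intros x Hx. destruct (HP x Hx) as [w [t [Hw [Ew Et]]]].
    destruct (Hsh w Hw) as [_ [ND [Wp [[a [t' [E [_ At]]]] Hl]]]].
    rewrite <- Ew in ND, Wp, E, Hl. split; auto. split; auto. split; auto.
    exists t. split; auto. rewrite Et in E. inversion E; subst. auto.
  - intros x y Hx Hy N.
    destruct (HP x Hx) as [wx [tx [Hwx [Ewx Ex]]]]. destruct (HP y Hy) as [wy [ty [Hwy [Ewy Ey]]]].
    apply (proj1 (proj2 HF')); [rewrite Ewx; apply in_map; auto|rewrite Ewy; apply in_map; auto|].
    rewrite Ex, Ey. intros E; inversion E; auto.
Qed.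

Variable link : nat -> V -> list V.
Hypothesis link_spec : forall i x, In x (layer i) -> link_path i x (link i x).
Hypothesis link_disjoint : forall i x y, In x (layer i) -> In y (layer i) -> x <> y ->
  avoids (link i x) (link i y).

Lemma link_shape i x : In x (layer i) -> exists t b, link i x = x :: t ++ [b] /\
  forall v, In v (t ++ [b]) -> reaches_end (layer i) v /\ ~ reaches_end (layer (S i)) v.
Proof.
  intros Hx. destruct (link_spec i x Hx) as [_ [Wp [[t [Et At]] [h [b [Eh [Hb Ah]]]]]]].
  destruct h as [|x' t']; rewrite Et in Eh; simpl in Eh; injection Eh as E1 E2.
  { exfalso. subst b. apply (reaches_end_notin _ _ _ _ (next_layer_reaches i x Hb)); auto. }
  subst x' t.
  rewrite Et in Wp. exists t', b. split; auto. intros v Hv. split.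
  - apply in_app_or in Hv as [Hv|[<-|[]]]; [|apply next_layer_reaches; auto].
    apply (reaches_end_walk_prefix adj r0 (layer i) t' b); auto.
    + apply walk_tail with x; auto. destruct t'; discriminate.
    + intros u Hu; apply At, in_or_app; auto.
    + apply next_layer_reaches; auto.
  - apply in_app_or in Hv as [Hv|[<-|[]]];
      [|intros Hs; apply (reaches_end_notin _ _ _ _ Hs); auto].
    apply (not_reaches_end_walk adj r0 (layer (S i)) x t'); simpl; auto.
    + apply walk_init with b; [|discriminate]. exact Wp.
    + apply layer_not_reaches_next; auto.
Qed.

Fixpoint pos (x : V) (i : nat) : V :=
  match i with 0 => x | S i => last (link i (pos x i)) x end.

Definition segment x i := tl (link i (pos x i)).

Section Trail.
Variable x : V.
Hypothesis x_in : In x (layer 0).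

Lemma pos_in i : In (pos x i) (layer i).
Proof.
  induction i as [|i IH]; simpl; auto.
  destruct (link_spec i _ IH) as [_ [_ [_ [h [b [E [Hb _]]]]]]]. rewrite E, last_last. auto.
Qed.

Lemma segment_shape i : link i (pos x i) = pos x i :: segment x i /\
  exists t, segment x i = t ++ [pos x (S i)].
Proof.
  destruct (link_shape i _ (pos_in i)) as [t [b [E _]]]. unfold segment. simpl. rewrite E.
  split; auto. exists t. rewrite app_comm_cons, last_last. auto.
Qed.

Lemma pos_S_in_link i : In (pos x (S i)) (link i (pos x i)).
Proof.
  destruct (segment_shape i) as [E [t Et]]. rewrite E, Et. right. apply in_or_app; simpl; auto.
Qed.

Lemma segment_in_link i : incl (segment x i) (link i (pos x i)).
Proof. rewrite (proj1 (segment_shape i)). intros v Hv. right; auto. Qed.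

Lemma segment_regions i v : In v (segment x i) ->
  reaches_end (layer i) v /\ ~ reaches_end (layer (S i)) v.
Proof.
  destruct (link_shape i _ (pos_in i)) as [t [b [E H]]]. unfold segment. rewrite E. apply H.
Qed.

Fixpoint trail m : list V :=
  match m with 0 => [x] | S m => trail m ++ segment x m end.

Lemma trail_last m : exists h, trail m = h ++ [pos x m].
Proof.
  induction m as [|m [h IH]]; [exists []; auto|].
  destruct (segment_shape m) as [_ [t Et]]. exists (trail m ++ t).
  simpl. rewrite Et, app_assoc. auto.
Qed.

Lemma walk_trail m : walk adj (trail m).
Proof.
  induction m as [|m IH]; simpl; [constructor|].
  destruct (trail_last m) as [h Eh]. destruct (segment_shape m) as [Es _].
  destruct (link_spec m _ (pos_in m)) as [_ [W _]].
  rewrite Eh, <- app_assoc. simpl. apply walk_app; [rewrite <- Eh; auto|rewrite <- Es; auto].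
Qed.

Lemma trail_length m : m < length (trail m).
Proof.
  induction m as [|m IH]; simpl; auto.
  destruct (segment_shape m) as [_ [t Et]]. rewrite length_app, Et, length_app. simpl. lia.
Qed.

Lemma trail_not_reaches m v : In v (trail m) -> ~ reaches_end (layer m) v.
Proof.
  induction m as [|m IH]; simpl.
  - intros [<-|[]] H. apply (reaches_end_notin _ _ _ _ H x_in).
  - intros Hv. apply in_app_or in Hv as [Hv|Hv].
    + intros H. apply (IH Hv). apply reaches_layer_S; auto.
    + apply segment_regions; auto.
Qed.

Lemma trail_NoDup m : NoDup (trail m).
Proof.
  induction m as [|m IH]; simpl; [repeat constructor; auto|].
  apply NoDup_app; auto.
  - destruct (segment_shape m) as [Es _]. destruct (link_spec m _ (pos_in m)) as [ND _].
    rewrite Es in ND. inversion ND; auto.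
  - intros v Hv Hs. apply (trail_not_reaches m v Hv). apply segment_regions; auto.
Qed.

Lemma trail_extends m m' : m <= m' -> exists s, trail m' = trail m ++ s /\
  forall v, In v s -> reaches_end (layer m) v.
Proof.
  induction 1 as [|m' L [s [E Hs]]]; [exists []; rewrite app_nil_r; split; auto; intros _ []|].
  exists (s ++ segment x m'). simpl. rewrite E, app_assoc. split; auto.
  intros v Hv. apply in_app_or in Hv as [Hv|Hv]; auto.
  apply reaches_layer_le with m'; auto. apply segment_regions; auto.
Qed.

Lemma in_trail m v : In v (trail m) -> v = x \/ exists i, In v (segment x i).
Proof.
  induction m as [|m IH]; simpl; [intros [<-|[]]; auto|].
  intros Hv. apply in_app_or in Hv as [Hv|Hv]; eauto.
Qed.

Definition ray n := nth n (trail n) x.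

Lemma ray_trail n m : n <= m -> nth n (trail m) x = ray n.
Proof.
  intros L. destruct (trail_extends n m L) as [s [E _]]. rewrite E. unfold ray.
  apply app_nth1, trail_length.
Qed.

Lemma ray_is_ray : is_ray adj ray.
Proof.
  split.
  - intros n m E. rewrite <- (ray_trail n (max n m)), <- (ray_trail m (max n m)) in E; try lia.
    apply (proj1 (NoDup_nth (trail (max n m)) x) (trail_NoDup _)) in E; auto;
      pose proof (trail_length (max n m)); lia.
  - intros n. rewrite <- (ray_trail n (S n)), <- (ray_trail (S n) (S n)); auto.
    apply walk_nth; [apply walk_trail|apply trail_length].
Qed.

Lemma ray_in_trail n : In (ray n) (trail n).
Proof. apply nth_In, trail_length. Qed.

Lemma ray_converges : ray_equiv' adj r0 ray.
Proof.
  intros Y. destruct (layer_eventually_separates_all Y) as [n Hn].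
  destruct (ray_eventually_avoids r0 (layer n) r0_inj) as [M HM].
  exists (max (length (trail n)) M). intros a b Ha Hb.
  apply (reaches_end_conn adj adj_sym r0 r0_adj (layer n)); auto.
  - apply reaches_end_r0. intros j Hj; apply HM; lia.
  - destruct (trail_extends n b) as [s [E Hs]];
      [pose proof (trail_length n); lia|].
    apply Hs. rewrite <- (ray_trail b b), E, app_nth2 by lia. apply nth_In.
    pose proof (trail_length b) as Lb. rewrite E, length_app in Lb. lia.
Qed.

End Trail.

Lemma pos_inj x y : In x (layer 0) -> In y (layer 0) -> x <> y -> forall i, pos x i <> pos y i.
Proof.
  intros Hx Hy N. induction i as [|i IH]; auto. intros E.
  apply (link_disjoint i (pos x i) (pos y i) (pos_in x Hx i) (pos_in y Hy i) IH (pos x (S i)));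
    [|rewrite E]; apply pos_S_in_link; auto.
Qed.

Lemma trails_disjoint x y m m' v : In x (layer 0) -> In y (layer 0) -> x <> y ->
  In v (trail x m) -> In v (trail y m') -> False.
Proof.
  intros Hx Hy N Hvx Hvy.
  assert (Hseg0 : forall z i u, In z (layer 0) -> In u (segment z i) -> ~ In u (layer 0)).
  { intros z i u Hz Hu. apply (reaches_end_notin adj r0).
    apply reaches_layer_le with i; [lia|]. apply (segment_regions z Hz i u Hu). }
  destruct (in_trail x m v Hvx) as [Ex|[i Hi]], (in_trail y m' v Hvy) as [Ey|[j Hj]].
  - congruence.
  - subst v. apply (Hseg0 y j x); auto.
  - subst v. apply (Hseg0 x i y); auto.
  - destruct (segment_regions x Hx i v Hi) as [Ri Ni], (segment_regions y Hy j v Hj) as [Rj Nj].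
    destruct (lt_eq_lt_dec i j) as [[L|<-]|L].
    + apply Ni, reaches_layer_le with j; auto.
    + apply (link_disjoint i (pos x i) (pos y i) (pos_in x Hx i) (pos_in y Hy i)
        (pos_inj x y Hx Hy N i) v); apply segment_in_link; auto.
    + apply Nj, reaches_layer_le with i; auto.
Qed.

Lemma layer_rays k : (forall Y, length Y <= k -> ~ separates Y F) ->
  k_disjoint_rays' (fun r => is_ray adj r /\ ray_equiv' adj r0 r) (S k).
Proof.
  intros H. set (x i := nth i (layer 0) (r0 0)).
  assert (L : S k <= length (layer 0)).
  { destruct (le_lt_dec (S k) (length (layer 0))) as [|L]; auto. exfalso.
    apply (H (layer 0)); [lia|]. apply (proj1 (layer_spec 0)). }
  assert (Hx : forall i, i < S k -> In (x i) (layer 0)) by (intros i Hi; apply nth_In; lia).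
  exists (fun i => ray (x i)). split.
  - intros i Hi. split; [apply ray_is_ray|apply ray_converges]; auto.
  - intros i j Hi Hj N n m E. cbv beta in E.
    apply (trails_disjoint (x i) (x j) n m (ray (x i) n)).
    + apply Hx; auto.
    + apply Hx; auto.
    + intros Ex. apply N.
      apply (proj1 (NoDup_nth (layer 0) (r0 0)) (proj1 (proj2 (layer_spec 0)))); auto; lia.
    + apply ray_in_trail, Hx; auto.
    + rewrite E. apply ray_in_trail, Hx; auto.
Qed.

End Layers.

Theorem many_disjoint_rays_in_end {V : Type} (adj : V -> V -> Prop)
  (adj_sym : forall u v, adj u v -> adj v u) (adj_irrefl : forall v, ~ adj v v)
  (nb : V -> list V) (nb_spec : forall v w, adj v w -> In w (nb v))
  (r0 : nat -> V) (r0_inj : forall n m, r0 n = r0 m -> n = m)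
  (r0_adj : forall n, adj (r0 n) (r0 (S n))) (k : nat) (F : list V) :
  (forall Y, length Y <= k -> ~ separates adj r0 Y F) ->
  k_disjoint_rays' (fun r => is_ray adj r /\ ray_equiv' adj r0 r) (S k).
Proof.
  destruct (choice _ (ex_min_separator adj r0 r0_inj)) as [min_sep Hmin].
  destruct (choice _ (layer_linkage adj adj_sym adj_irrefl nb r0 r0_inj r0_adj min_sep Hmin F))
    as [link Hlink].
  exact (layer_rays adj adj_sym nb nb_spec r0 r0_inj r0_adj min_sep Hmin F link
    (fun i => proj1 (Hlink i)) (fun i => proj2 (Hlink i)) k).
Qed.

Corollary separator_of_few_rays {V : Type} (adj : V -> V -> Prop)
  (adj_sym : forall u v, adj u v -> adj v u) (adj_irrefl : forall v, ~ adj v v)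
  (nb : V -> list V) (nb_spec : forall v w, adj v w -> In w (nb v))
  (r0 : nat -> V) (r0_ray : is_ray adj r0) (alpha : (nat -> V) -> Prop)
  (alpha_spec : forall r, alpha r <-> is_ray adj r /\ ray_equiv' adj r0 r) (k : nat) (F : list V) :
  ~ k_disjoint_rays' alpha (S k) -> exists Y, length Y <= k /\ separates adj r0 Y F.
Proof.
  intros Nk. apply NNPP. intros N. apply Nk.
  destruct (many_disjoint_rays_in_end adj adj_sym adj_irrefl nb nb_spec r0
    (proj1 r0_ray) (proj2 r0_ray) k F) as [f [Hf Hfd]]; [intros Y LY HY; apply N; eauto|].
  exists f. split; auto. intros i Hi. apply alpha_spec, Hf; auto.
Qed.

Lemma k_disjoint_rays'_le {V : Type} (alpha : (nat -> V) -> Prop) k k' :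
  k <= k' -> k_disjoint_rays' alpha k' -> k_disjoint_rays' alpha k.
Proof.
  intros L [f [Hf Hd]]. exists f. split; [intros i Hi; apply Hf; lia|].
  intros i j Hi Hj; apply Hd; lia.
Qed.

Section Product.
Context {V T : Type}.
Variable adj : V -> V -> Prop.
Hypothesis adj_sym : forall u v, adj u v -> adj v u.
Variable e : T -> T -> bool.
Hypothesis e_sym : forall a b, e a b = true -> e b a = true.
Variable lT : list T.
Hypothesis lT_nodup : NoDup lT.
Hypothesis lT_full : forall t, In t lT.
Hypothesis D_conn : forall a b, conn_avoid (fun a b => e a b = true) [] a b.
Variable x0 : T.
Variables (alpha : (nat -> V) -> Prop) (alpha' : (nat -> V * T) -> Prop).
Variables (r0 : nat -> V) (r0' : nat -> V * T).
Hypothesis r0_ray : is_ray adj r0.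
Hypothesis alpha_spec : forall r, alpha r <-> is_ray adj r /\ ray_equiv' adj r0 r.
Hypothesis alpha'_spec :
  forall r, alpha' r <-> is_ray (cart_adj adj e) r /\ ray_equiv' (cart_adj adj e) r0' r.
Hypothesis alpha_in_alpha' : forall r, alpha r -> alpha' (fun n => (r n, x0)).

Local Notation cadj := (cart_adj adj e).

Lemma cart_adj_sym p q : cadj p q -> cadj q p.
Proof. unfold cart_adj. intros [[E H]|[H E]]; [left|right]; split; auto. Qed.

Lemma fibre_conn v a b Y : (forall t, ~ In (v, t) Y) -> conn_avoid cadj Y (v, a) (v, b).
Proof.
  intros HY. induction (D_conn a b) as [c _|c d f _ Hcd _ IH].
  - constructor; auto.
  - econstructor; [apply HY| |exact IH]. left; simpl; auto.
Qed.

Lemma copy_is_ray r y : is_ray adj r -> is_ray cadj (fun n => (r n, y)).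
Proof.
  intros [Hi Ha]. split.
  - intros n m E. inversion E. auto.
  - intros n. right. simpl. auto.
Qed.

Lemma copies_equiv r y : is_ray adj r ->
  ray_equiv' cadj (fun n => (r n, x0)) (fun n => (r n, y)).
Proof.
  intros Hr Y. destruct (ray_eventually_avoids r (map fst Y) (proj1 Hr)) as [M HM].
  assert (HY : forall j, M <= j -> forall t, ~ In (r j, t) Y).
  { intros j Hj t Hin. apply (HM j Hj). change (r j) with (fst (r j, t)). apply in_map; auto. }
  exists M. intros n m Hn Hm. apply conn_avoid_trans with (r m, x0).
  - apply (ray_tail_conn cadj cart_adj_sym _ Y M (proj2 (copy_is_ray r x0 Hr))); auto.
  - apply fibre_conn; auto.
Qed.

Lemma alpha'_copy r y : alpha r -> alpha' (fun n => (r n, y)).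
Proof.
  intros Ha. assert (Hr : is_ray adj r) by (apply alpha_spec; auto).
  apply alpha'_spec. split; [apply copy_is_ray; auto|].
  apply (ray_equiv'_trans cadj) with (fun n => (r n, x0)); [|apply copies_equiv; auto].
  apply alpha'_spec, alpha_in_alpha'; auto.
Qed.

(* Ray [i / |T|] of [alpha], copied into [G x {t}] for the [(i mod |T|)]-th vertex [t]. *)
Lemma product_rays_lower k : k_disjoint_rays' alpha k -> k_disjoint_rays' alpha' (k * length lT).
Proof.
  intros [f [Hf Hd]]. set (L := length lT).
  assert (L0 : L <> 0) by (unfold L; destruct lT; [destruct (lT_full x0)|discriminate]).
  exists (fun i n => (f (i / L) n, nth (i mod L) lT x0)). split.
  - intros i Hi. apply alpha'_copy. apply Hf. apply Nat.Div0.div_lt_upper_bound; lia.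
  - intros i j Hi Hj N n m E. inversion E as [[E1 E2]].
    destruct (Nat.eq_dec (i / L) (j / L)) as [D|D].
    + assert (Hmod : i mod L <> j mod L).
      { intros M. apply N. rewrite (Nat.div_mod i L L0), (Nat.div_mod j L L0), D, M. auto. }
      apply Hmod. apply (proj1 (NoDup_nth lT x0) lT_nodup); auto; apply Nat.mod_upper_bound; auto.
    + apply (Hd (i / L) (j / L)) with n m; auto; apply Nat.Div0.div_lt_upper_bound; lia.
Qed.

Lemma project_conn Y p q :
  conn_avoid cadj (list_prod Y lT) p q -> conn_avoid adj Y (fst p) (fst q).
Proof.
  assert (NI : forall p, ~ In p (list_prod Y lT) -> ~ In (fst p) Y).
  { intros [a b] Hp Ha. apply Hp. apply in_prod; auto. }
  induction 1 as [p Hp|p q w Hp [[E _]|[A _]] _ IH].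
  - constructor. apply NI; auto.
  - rewrite E; auto.
  - econstructor; eauto.
Qed.

(* A ray of [alpha'] avoiding [Y x T] would project to a walk from its start to the end of [r0]. *)
Lemma ray_meets_separator g Y : alpha' g -> ~ reaches_end adj r0 Y (fst (g 0)) ->
  exists n, In (g n) (list_prod Y lT).
Proof.
  intros Hg Hsep. apply NNPP. intros N.
  destruct (proj1 (alpha'_spec g) Hg) as [[_ g_adj] Hequiv].
  assert (Hcopy := proj2 (proj1 (alpha'_spec _) (alpha_in_alpha' r0
    (proj2 (alpha_spec r0) (conj r0_ray (ray_equiv'_refl adj adj_sym r0 r0_ray)))))).
  destruct (ray_equiv'_trans cadj _ _ _ (ray_equiv'_sym cadj cart_adj_sym _ _ Hcopy) Hequiv
    (list_prod Y lT)) as [K HK].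
  destruct (ray_eventually_avoids r0 Y (proj1 r0_ray)) as [M HM].
  apply Hsep. exists (max K M). split; [intros j Hj; apply HM; lia|].
  apply (project_conn Y (g 0) (r0 (max K M), x0)).
  apply conn_avoid_trans with (g K).
  - apply (ray_tail_conn cadj cart_adj_sym g _ 0); auto; try lia. intros j _ Hj; apply N; eauto.
  - apply conn_avoid_sym; [apply cart_adj_sym|]. apply HK; lia.
Qed.

Hypothesis adj_irrefl : forall v, ~ adj v v.
Variable nb : V -> list V.
Hypothesis nb_spec : forall v w, adj v w -> In w (nb v).

(* Fewer than [k + 1] rays in [alpha] give at most [k] vertices separating the
   projected starts of the rays of [alpha'] from the end; every ray of [alpha']
   then meets the [k * |T|] vertices above them. *)
Lemma product_rays_upper k :
  ~ k_disjoint_rays' alpha (S k) -> ~ k_disjoint_rays' alpha' (S (k * length lT)).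
Proof.
  intros Nk [g [Hg Hd]].
  set (K := S (k * length lT)).
  destruct (separator_of_few_rays adj adj_sym adj_irrefl nb nb_spec r0 r0_ray alpha alpha_spec k
    (map (fun i => fst (g i 0)) (seq 0 K)) Nk) as [Y [LY HY]].
  destruct (choice_on 0 (fun i => i < K) (fun i n => In (g i n) (list_prod Y lT))) as [nf Hnf].
  { intros i Hi. apply ray_meets_separator; [apply Hg; auto|].
    apply HY. apply in_map_iff. exists i. split; auto. apply in_seq. lia. }
  assert (Hinj : NoDup (map (fun i => g i (nf i)) (seq 0 K))).
  { apply NoDup_map_NoDup_ForallPairs; [|apply seq_NoDup]. intros i j Hi Hj E.
    apply in_seq in Hi. apply in_seq in Hj.
    destruct (Nat.eq_dec i j); auto. exfalso. apply (Hd i j) with (nf i) (nf j); auto; lia. }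
  assert (Hincl : incl (map (fun i => g i (nf i)) (seq 0 K)) (list_prod Y lT)).
  { intros p Hp. apply in_map_iff in Hp as [i [<- Hi]]. apply in_seq in Hi. apply Hnf. lia. }
  pose proof (NoDup_incl_length Hinj Hincl) as L.
  rewrite length_map, length_seq, length_prod in L.
  pose proof (Nat.mul_le_mono_r _ _ (length lT) LY). unfold K in L. lia.
Qed.

End Product.

From mathcomp Require Import all_boot.

Lemma ray_equiv_iff {V : Type} (R : V -> V -> Prop) r1 r2 :
  ray_equiv R r1 r2 <-> ray_equiv' R r1 r2.
Proof. by split=> H S; have [k K] := H S; exists k => n m /leP Hn /leP Hm; apply: K. Qed.

Lemma k_disjoint_rays_iff {V : Type} (alpha : (nat -> V) -> Prop) k :
  k_disjoint_rays alpha k <-> k_disjoint_rays' alpha k.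
Proof.
  by split=> -[f [H1 H2]]; exists f; split=> [i /ltP|i j /ltP Hi /ltP Hj]; by [apply: H1|apply: H2].
Qed.

Lemma list_In_mem (T : eqType) (x : T) (s : seq T) : List.In x s <-> x \in s.
Proof.
  elim: s => [|y s IH] //=. rewrite in_cons. split.
  - by case=> [->|/IH ->]; rewrite ?eqxx ?orbT.
  - by case/orP=> [/eqP ->|/IH]; [left|right].
Qed.

Lemma uniq_NoDup (T : eqType) (s : seq T) : uniq s -> List.NoDup s.
Proof.
  elim: s => [|y s IH] /=; first by constructor.
  case/andP=> ys us; constructor; last exact: IH.
  by move/list_In_mem; rewrite (negbTE ys).
Qed.

Lemma size_length (A : Type) (s : seq A) : size s = length s.
Proof. by elim: s => //= a s ->. Qed.

Lemma connect_conn_avoid (T : finType) (e : rel T) x y :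
  connect e x y -> conn_avoid (fun a b => e a b) [::] x y.
Proof.
  case/connectP=> p; elim: p x => [|z p IH] x /=; first by move=> _ ->; constructor.
  by case/andP=> exz pz yl; econstructor; [|exact: exz|exact: IH].
Qed.

Theorem lemma19 (V : Type) (adj : V -> V -> Prop) (T : finType) (e : rel T) (x0 : T)
  (alpha : (nat -> V) -> Prop) (alpha' : (nat -> V * T) -> Prop) (d : option nat) :
  simple_graph adj -> locally_finite adj -> infinite_graph V ->
  simple_graph (fun x y : T => e x y) -> (forall x y : T, connect e x y) ->
  is_end adj alpha ->
  is_end (cart_adj adj e) alpha' ->
  (forall r, alpha r -> alpha' (fun n => (r n, x0))) ->
  end_degree alpha d ->
  end_degree alpha' (odeg_mul d #|T|).
Proof.
  (* [infinite_graph V] is implied by the existence of the ray of [alpha]. *)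
  move=> [adj_sym adj_irrefl] lf _ [e_sym _] e_conn [r0 [r0_ray Hal]] [r0' [_ Hal']] hcopy Hd.
  have [nb nb_spec] := choice _ lf.
  have alpha_spec r : alpha r <-> is_ray adj r /\ ray_equiv' adj r0 r.
    by rewrite Hal ray_equiv_iff.
  have alpha'_spec r : alpha' r <-> is_ray (cart_adj adj e) r /\ ray_equiv' (cart_adj adj e) r0' r.
    by rewrite Hal' ray_equiv_iff.
  have enum_nodup : List.NoDup (enum T) := uniq_NoDup _ _ (enum_uniq T).
  have enum_full t : List.In t (enum T) by apply/list_In_mem; rewrite mem_enum.
  have D_conn a b := connect_conn_avoid _ _ _ _ (e_conn a b).
  have lower k := product_rays_lower adj adj_sym e e_sym (enum T) enum_nodup enum_full D_conn x0
    alpha alpha' r0 r0' alpha_spec alpha'_spec hcopy k.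
  rewrite cardE size_length; case: d Hd => [k [Hk Nk]|Hd] /=; last first.
    move=> k; apply/k_disjoint_rays_iff.
    apply: (k_disjoint_rays'_le _ k (k * length (enum T))); last exact/lower/k_disjoint_rays_iff.
    by apply/leP; rewrite leq_pmulr // -size_length -cardE; apply/card_gt0P; exists x0.
  rewrite !k_disjoint_rays_iff in Hk Nk *; split; first exact: lower.
  rewrite mulnE; exact: (product_rays_upper adj adj_sym e e_sym (enum T) enum_full x0 alpha alpha'
    r0 r0' r0_ray alpha_spec alpha'_spec hcopy adj_irrefl nb nb_spec k Nk).
Qed.
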